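(* Let $\mathrm{Ha}>0$ and $\mathrm{Pm}>0$, let $\mathrm{Re}>0$, and put $\mathrm{Rm}=\mathrm{Pm}\,\mathrm{Re}$ and $A=\mathrm{Ha}^2\mathrm{Pm}$. Consider either of the following basic (laminar) solutions $\mathbf v=(U(z),0,0)$, $\hat{\mathbf B}=(\bar B(z),0,\mathrm{Rm}^{-1})$ of the stationary non-dimensional magnetohydrodynamics equations in the layer $\mathbb R^2\times[-1,1]$: (i) the magnetic Couette flow $U(z)=\dfrac{\sinh(\mathrm{Ha}\,z)}{\sinh(\mathrm{Ha})}$, $\bar B(z)=\dfrac{\cosh(\mathrm{Ha})-\cosh(\mathrm{Ha}\,z)}{\mathrm{Ha}\sinh(\mathrm{Ha})}$; (ii) the Hartmann flow $U(z)=\dfrac{\cosh(\mathrm{Ha})-\cosh(\mathrm{Ha}\,z)}{\cosh(\mathrm{Ha})-1}$, $\bar B(z)=\dfrac{\sinh(\mathrm{Ha}\,z)-z\sinh(\mathrm{Ha})}{\mathrm{Ha}(\cosh(\mathrm{Ha})-1)}$. Let $\mathrm{Re}_E$ be the energy critical Reynolds number defined in the context. If $\mathrm{Re}<\mathrm{Re}_E$, then the basic magnetic Couette and Hartmann motions are monotonically asymptotically stable in the energy norm $E$: every perturbation $(\mathbf u,\mathbf h,\bar\pi)$ as described in the context satisfies $$E(t)\le E(0)\,e^{\frac{\pi^2}{2}c_0(\mathrm{Re}-\mathrm{Re}_E)t}\qquad\text{for all }t\ge 0,$$ with a positive constant $c_0$ depending on $\mathrm{Ha}$ and $\mathrm{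Pm}$.
   Context: Perturbations: $\mathbf u=(u,v,w)$, $\mathbf h=(h,k,\ell)$, $\bar\pi$ are $C^2$ functions of $(x,y,z,t)$, $z\in[-1,1]$, periodic in $x$ and $y$ with periodicity cell $\Omega=[0,2\pi/a]\times[0,2\pi/b]\times[-1,1]$, satisfying rigid and non-conducting boundary conditions $\mathbf u=\mathbf h=0$ on $z=\pm1$, and solving $$\mathbf u_t+U\mathbf u_x+wU'\mathbf i+\mathbf u\cdot\nabla\mathbf u=A\Big[\bar B\mathbf h_x+\frac{\mathbf h_z}{\mathrm{Rm}}+\ell\bar B'\mathbf i+\mathbf h\cdot\nabla\mathbf h\Big]-\nabla\bar\pi+\frac{\Delta\mathbf u}{\mathrm{Re}},$$ $$\mathbf h_t+w\bar B'\mathbf i+U\mathbf h_x+\mathbf u\cdot\nabla\mathbf h-\bar B\mathbf u_x-\frac{\mathbf u_z}{\mathrm{Rm}}-\ell U'\mathbf i-\mathbf h\cdot\nabla\mathbf u=\frac{\Delta\mathbf h}{\mathrm{Rm}},\qquad\nabla\cdot\mathbf u=\nabla\cdot\mathbf h=0,$$ where $\mathbf i$ is the unit vector in the $x$ direction and $'$ denotes $d/dz$. $(\cdot,\cdot)$ and $\|\cdot\|$ are the $L^2(\Omega)$ inner product and norm. The energy is $E(t)=\tfrac12(\|\mathbf u\|^2+A\|\mathbf h\|^2)$. Let $\mathcal S$ be the set of pairs $(\mathbf u,\mathbf h)$ of vector fields on $\Omega$ with components in $W^{1,2}(\Omega)$, periodic in $x,y$, vanishing at $z=\pm1$, divergence-free,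 with $\|\nabla\mathbf u\|+\|\nabla\mathbf h\|>0$. Define $$I=-(U'w,u)+A\big[(\ell\bar B',u)-(w\bar B',h)+(\ell U',h)\big],\qquad \mathcal D_1=\|\nabla u\|^2+\|\nabla w\|^2+\mathrm{Ha}^2\big[\|\nabla h\|^2+\|\nabla\ell\|^2\big].$$ The critical Reynolds number $\mathrm{Re}_E$ is defined by $\mathrm{Re}_E^{-1}=m=\max_{\mathcal S} I/\mathcal D_1$ (the maximum exists). *)

From Stdlib Require Import Reals.
From Coquelicot Require Import Coquelicot.
Open Scope R_scope.

Inductive basic_flow := MagneticCouette | Hartmann.

Definition Ubase (fl : basic_flow) (Ha z : R) : R :=
  match fl with
  | MagneticCouette => sinh (Ha * z) / sinh Ha
  | Hartmann => (cosh Ha - cosh (Ha * z)) / (cosh Ha - 1)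
  end.

Definition Bbase (fl : basic_flow) (Ha z : R) : R :=
  match fl with
  | MagneticCouette => (cosh Ha - cosh (Ha * z)) / (Ha * sinh Ha)
  | Hartmann => (sinh (Ha * z) - z * sinh Ha) / (Ha * (cosh Ha - 1))
  end.

Definition dU fl Ha z := Derive (Ubase fl Ha) z.
Definition dB fl Ha z := Derive (Bbase fl Ha) z.

Definition field4 := R -> R -> R -> R -> R.

Definition dx (f : field4) : field4 := fun x y z t => Derive (fun s => f s y z t) x.
Definition dy (f : field4) : field4 := fun x y z t => Derive (fun s => f x s z t) y.
Definition dz (f : field4) : field4 := fun x y z t => Derive (fun s => f x y s t) z.
Definition dt (f : field4) : field4 := fun x y z t => Derive (fun s => f x y z s) t.

Definition lap (f : field4) : field4 :=
  fun x y z t => dx (dx f) x y z t + dy (dy f) x y z t + dz (dz f) x y z t.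

Definition cont4 (f : field4) : Prop :=
  forall x y z t eps, 0 < eps -> exists delta, 0 < delta /\
    forall x' y' z' t', Rabs (x' - x) < delta -> Rabs (y' - y) < delta ->
      Rabs (z' - z) < delta -> Rabs (t' - t) < delta ->
      Rabs (f x' y' z' t' - f x y z t) < eps.

Definition ex_partials4 (f : field4) : Prop :=
  forall x y z t,
    ex_derive (fun s => f s y z t) x /\ ex_derive (fun s => f x s z t) y /\
    ex_derive (fun s => f x y s t) z /\ ex_derive (fun s => f x y z s) t.

Definition C1_4 (f : field4) : Prop :=
  ex_partials4 f /\ cont4 f /\ cont4 (dx f) /\ cont4 (dy f) /\ cont4 (dz f) /\ cont4 (dt f).

Definition C2_4 (f : field4) : Prop :=
  C1_4 f /\ C1_4 (dx f) /\ C1_4 (dy f) /\ C1_4 (dz f) /\ C1_4 (dt f).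

Definition periodic4 (a b : R) (f : field4) : Prop :=
  forall x y z t, f (x + 2 * PI / a) y z t = f x y z t /\ f x (y + 2 * PI / b) z t = f x y z t.

Definition int3 (a b : R) (g : R -> R -> R -> R) : R :=
  RInt (fun x => RInt (fun y => RInt (fun z => g x y z) (-1) 1) 0 (2 * PI / b)) 0 (2 * PI / a).

Definition energy (a b A : R) (u v w h k l : field4) (t : R) : R :=
  / 2 * (int3 a b (fun x y z => u x y z t ^ 2 + v x y z t ^ 2 + w x y z t ^ 2)
         + A * int3 a b (fun x y z => h x y z t ^ 2 + k x y z t ^ 2 + l x y z t ^ 2)).

Definition is_perturbation (fl : basic_flow) (a b Ha Pm Re : R)
    (u v w h k l p : field4) : Prop :=
  let Rm := Pm * Re in
  let A := Ha ^ 2 * Pm in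
  let U := Ubase fl Ha in let B := Bbase fl Ha in
  let U' := dU fl Ha in let B' := dB fl Ha in
  (C2_4 u /\ C2_4 v /\ C2_4 w /\ C2_4 h /\ C2_4 k /\ C2_4 l /\ C2_4 p) /\
  (periodic4 a b u /\ periodic4 a b v /\ periodic4 a b w /\ periodic4 a b h /\
   periodic4 a b k /\ periodic4 a b l /\ periodic4 a b p) /\
  (* rigid, non-conducting boundary conditions *)
  (forall x y t, 0 <= t -> forall z, (z = 1 \/ z = -1) ->
     u x y z t = 0 /\ v x y z t = 0 /\ w x y z t = 0 /\
     h x y z t = 0 /\ k x y z t = 0 /\ l x y z t = 0) /\
  (forall x y z t, -1 <= z <= 1 -> 0 <= t ->
    let adv (q : field4 * field4 * field4) (g : field4) :=
      (let '(q1, q2, q3) := q in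
       q1 x y z t * dx g x y z t + q2 x y z t * dy g x y z t + q3 x y z t * dz g x y z t) in
    let uu := (u, v, w) in let hh := (h, k, l) in
    dt u x y z t + U z * dx u x y z t + w x y z t * U' z + adv uu u
      = A * (B z * dx h x y z t + dz h x y z t / Rm + l x y z t * B' z + adv hh h)
        - dx p x y z t + lap u x y z t / Re /\
    dt v x y z t + U z * dx v x y z t + adv uu v
      = A * (B z * dx k x y z t + dz k x y z t / Rm + adv hh k)
        - dy p x y z t + lap v x y z t / Re /\
    dt w x y z t + U z * dx w x y z t + adv uu w
      = A * (B z * dx l x y z t + dz l x y z t / Rm + adv hh l)
        - dz p x y z t + lap w x y z t / Re /\
    dt h x y z t + w x y z t * B' z + U z * dx h x y z t + adv uu h
      - B z * dx u x y z t - dz u x y z t / Rm - l x y z t * U' z - adv hh u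
      = lap h x y z t / Rm /\
    dt k x y z t + U z * dx k x y z t + adv uu k
      - B z * dx v x y z t - dz v x y z t / Rm - adv hh v
      = lap k x y z t / Rm /\
    dt l x y z t + U z * dx l x y z t + adv uu l
      - B z * dx w x y z t - dz w x y z t / Rm - adv hh w
      = lap l x y z t / Rm /\
    dx u x y z t + dy v x y z t + dz w x y z t = 0 /\
    dx h x y z t + dy k x y z t + dz l x y z t = 0).

Definition field3 := R -> R -> R -> R.

Definition ex3 (f : field3) : field3 := fun x y z => Derive (fun s => f s y z) x.
Definition ey3 (f : field3) : field3 := fun x y z => Derive (fun s => f x s z) y.
Definition ez3 (f : field3) : field3 := fun x y z => Derive (fun s => f x y s) z.

Definition cont3 (f : field3) : Prop :=
  forall x y z eps, 0 < eps -> exists delta, 0 < delta /\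
    forall x' y' z', Rabs (x' - x) < delta -> Rabs (y' - y) < delta ->
      Rabs (z' - z) < delta -> Rabs (f x' y' z' - f x y z) < eps.

Definition C1_3 (f : field3) : Prop :=
  (forall x y z, ex_derive (fun s => f s y z) x /\ ex_derive (fun s => f x s z) y /\
                 ex_derive (fun s => f x y s) z) /\
  cont3 f /\ cont3 (ex3 f) /\ cont3 (ey3 f) /\ cont3 (ez3 f).

Definition admissible3 (a b : R) (f : field3) : Prop :=
  C1_3 f /\
  (forall x y z, f (x + 2 * PI / a) y z = f x y z /\ f x (y + 2 * PI / b) z = f x y z) /\
  (forall x y, f x y 1 = 0 /\ f x y (-1) = 0).

Definition gradsq (a b : R) (f : field3) : R :=
  int3 a b (fun x y z => ex3 f x y z ^ 2 + ey3 f x y z ^ 2 + ez3 f x y z ^ 2).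

Definition in_S (a b : R) (u v w h k l : field3) : Prop :=
  admissible3 a b u /\ admissible3 a b v /\ admissible3 a b w /\
  admissible3 a b h /\ admissible3 a b k /\ admissible3 a b l /\
  (forall x y z, ex3 u x y z + ey3 v x y z + ez3 w x y z = 0) /\
  (forall x y z, ex3 h x y z + ey3 k x y z + ez3 l x y z = 0) /\
  sqrt (gradsq a b u + gradsq a b v + gradsq a b w)
    + sqrt (gradsq a b h + gradsq a b k + gradsq a b l) > 0.

Definition Ifun (fl : basic_flow) (a b Ha Pm : R) (u v w h k l : field3) : R :=
  let A := Ha ^ 2 * Pm in
  - int3 a b (fun x y z => dU fl Ha z * w x y z * u x y z)
  + A * (int3 a b (fun x y z => l x y z * dB fl Ha z * u x y z)
         - int3 a b (fun x y z => w x y z * dB fl Ha z * h x y z)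
         + int3 a b (fun x y z => l x y z * dU fl Ha z * h x y z)).

Definition D1fun (a b Ha : R) (u v w h k l : field3) : R :=
  gradsq a b u + gradsq a b w + Ha ^ 2 * (gradsq a b h + gradsq a b l).

(* m is the maximum (here: least upper bound) of I/D_1 over S;  Re_E = 1/m *)
Definition is_sup_ratio (fl : basic_flow) (a b Ha Pm m : R) : Prop :=
  (forall u v w h k l, in_S a b u v w h k l ->
     Ifun fl a b Ha Pm u v w h k l / D1fun a b Ha u v w h k l <= m) /\
  (forall m', (forall u v w h k l, in_S a b u v w h k l ->
     Ifun fl a b Ha Pm u v w h k l / D1fun a b Ha u v w h k l <= m') -> m <= m').

(* Energy method.  Multiplying the momentum equations by (u, v, w) and the induction
   equations by A (h, k, l), the nonlinear, magnetic-coupling and pressure terms become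
   advections along solenoidal fields -- the total velocity (U + u, v, w) and the total
   magnetic field (B + h, k, 1/Rm + l), resp. (u, v, w) -- and integrate to zero over the
   periodicity cell, while the Laplacians give Dirichlet integrals.  Since A / Rm = Ha^2 / Re,
     E' = I - D / Re,   D = ||grad u||^2 + Ha^2 ||grad h||^2.
   By definition of m, I <= m D1 <= m D (the slices of the perturbation belong to S once w
   and l are extended divergence-free off the layer), and the Poincare inequality
   ||f||^2 <= 4 ||f_z||^2 on the layer gives E <= 2 (1 + Pm) D.  For Re < 1/m this yields
     E' <= (m - 1/Re) D <= m^2 (Re - 1/m) E / (2 (1 + Pm)),
   and Gronwall's lemma gives the claim with c0 = m^2 / ((1 + Pm) pi^2). *)

From Stdlib Require Import Reals Lra Psatz FunctionalExtensionality Classical ClassicalEpsilon.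
From Coquelicot Require Import Coquelicot.
Open Scope R_scope.

(** * Continuous fields and parametric integrals *)

Lemma cont4_op2 (op : R -> R -> R) :
  (forall a b, continuous (fun p : R * R => op (fst p) (snd p)) (a, b)) ->
  forall F G : field4, cont4 F -> cont4 G -> cont4 (fun x y z t => op (F x y z t) (G x y z t)).
Proof.
  intros Hop F G HF HG x y z t eps Heps.
  destruct (proj1 (filterlim_locally _ _) (Hop (F x y z t) (G x y z t)) (mkposreal eps Heps))
    as [e He].
  destruct (HF x y z t e (cond_pos e)) as [d1 [Hd1 HF']].
  destruct (HG x y z t e (cond_pos e)) as [d2 [Hd2 HG']].
  exists (Rmin d1 d2); split; [now apply Rmin_glb_lt|].
  intros x' y' z' t' Hx Hy Hz Ht.
  pose proof (Rmin_l d1 d2); pose proof (Rmin_r d1 d2).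
  apply (He (F x' y' z' t', G x' y' z' t')); split; [apply HF' | apply HG']; lra.
Qed.

Lemma cont4_plus F G : cont4 F -> cont4 G -> cont4 (fun x y z t => F x y z t + G x y z t).
Proof.
  apply cont4_op2; intros a b.
  exact (continuous_plus fst snd (a, b) (continuous_fst a b) (continuous_snd a b)).
Qed.

Lemma cont4_minus F G : cont4 F -> cont4 G -> cont4 (fun x y z t => F x y z t - G x y z t).
Proof.
  apply cont4_op2; intros a b.
  exact (continuous_minus fst snd (a, b) (continuous_fst a b) (continuous_snd a b)).
Qed.

Lemma cont4_mult F G : cont4 F -> cont4 G -> cont4 (fun x y z t => F x y z t * G x y z t).
Proof.
  apply cont4_op2; intros a b.
  exact (continuous_mult fst snd (a, b) (continuous_fst a b) (continuous_snd a b)).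
Qed.

Lemma cont4_zfun (W : R -> R) : (forall z, continuous W z) -> cont4 (fun _ _ z _ => W z).
Proof.
  intros HW x y z t eps Heps.
  destruct (proj1 (filterlim_locally _ _) (HW z) (mkposreal eps Heps)) as [d Hd].
  exists d; split; [apply cond_pos|]. intros; now apply Hd.
Qed.

Lemma cont4_const c : cont4 (fun _ _ _ _ => c).
Proof. apply (cont4_zfun (fun _ => c)); intros; apply continuous_const. Qed.

Lemma cont4_pow F n : cont4 F -> cont4 (fun x y z t => F x y z t ^ n).
Proof.
  intros HF; induction n as [|n IH]; [exact (cont4_const 1)|].
  exact (cont4_mult F _ HF IH).
Qed.

Lemma cont4_ext F G : cont4 F -> (forall x y z t, G x y z t = F x y z t) -> cont4 G.
Proof.
  intros HF HGF. replace G with F; [exact HF|].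
  do 4 (apply functional_extensionality; intros). now rewrite HGF.
Qed.

Lemma cont4_opp F : cont4 F -> cont4 (fun x y z t => - F x y z t).
Proof.
  intros HF. apply (cont4_ext (fun x y z t => -1 * F x y z t)); [|intros; ring].
  exact (cont4_mult _ F (cont4_const (-1)) HF).
Qed.

Lemma cont4_swap_yz F : cont4 F -> cont4 (fun x y z t => F x z y t).
Proof.
  intros HF x y z t eps Heps. destruct (HF x z y t eps Heps) as [d [Hd Hclose]].
  exists d; split; [exact Hd|]. intros; now apply Hclose.
Qed.

Lemma cont4_swap_zt F : cont4 F -> cont4 (fun x y z t => F x y t z).
Proof.
  intros HF x y z t eps Heps. destruct (HF x y t z eps Heps) as [d [Hd Hclose]].
  exists d; split; [exact Hd|]. intros; now apply Hclose.
Qed.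

Lemma continuous_of_eps_delta (f : R -> R) x :
  (forall eps, 0 < eps -> exists d, 0 < d /\
     forall y, Rabs (y - x) < d -> Rabs (f y - f x) < eps) ->
  continuous f x.
Proof.
  intros H. apply filterlim_locally. intros eps.
  destruct (H eps (cond_pos eps)) as [d [Hd Hy]].
  now exists (mkposreal d Hd).
Qed.

(* [restrict_cont4 HF], with [HF : cont4 F], proves a goal [continuous f x] or
   [continuity_2d_pt f x y] where f is F with all but one or two arguments frozen;
   the frozen values are found by unification. *)
Ltac restrict_cont4 HF :=
  let e := fresh "e" in let He := fresh "He" in
  let d := fresh "d" in let Hd := fresh "Hd" in let close := fresh "close" in
  let eps_delta f x :=
    apply (continuous_of_eps_delta f x); intros e He;
    epose proof (HF _ _ _ _ e He) as [d [Hd close]]; exists d; split; [exact Hd|] in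
  lazymatch goal with
  | |- continuity_2d_pt _ _ _ =>
      intros e; epose proof (HF _ _ _ _ e (cond_pos e)) as [d [Hd close]];
      exists (mkposreal d Hd)
  | |- continuous ?f ?x => eps_delta f x
  | |- filterlim ?f (locally ?x) _ => eps_delta f x
  end;
  intros; eapply close; simpl;
  solve [eassumption | rewrite Rminus_eq_0, Rabs_R0; assumption].

Lemma uniform_closeness_on_segment {P : UniformSpace} (F : P -> R -> R) (p0 : P) (a b : R) :
  (forall z, a <= z <= b -> forall eps : posreal, exists d : posreal,
     forall p z', ball p0 d p -> Rabs (z' - z) < d -> Rabs (F p z' - F p0 z) < eps) ->
  forall eps : posreal, exists d : posreal,
     forall p z, ball p0 d p -> a <= z <= b -> Rabs (F p z - F p0 z) < eps.
Proof.
  intros Hc eps.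
  assert (Hdelta : forall z, exists d : posreal, a <= z <= b -> forall p z',
     ball p0 d p -> Rabs (z' - z) < d -> Rabs (F p z' - F p0 z) < eps / 2).
  { intros z. destruct (classic (a <= z <= b)) as [Hz|Hz].
    - destruct (Hc z Hz (pos_div_2 eps)) as [d Hd]. now exists d.
    - exists (mkposreal 1 Rlt_0_1). tauto. }
  set (delta z := proj1_sig (constructive_indefinite_description _ (Hdelta z))).
  assert (Hdelta' : forall z, a <= z <= b -> forall p z', ball p0 (delta z) p ->
     Rabs (z' - z) < delta z -> Rabs (F p z' - F p0 z) < eps / 2).
  { intros z. exact (proj2_sig (constructive_indefinite_description _ (Hdelta z))). }
  destruct (compactness_value_1d a b delta) as [d Hd].
  exists d. intros p z Hp Hz. apply NNPP. intros Hn. apply (Hd z Hz).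
  intros [z0 [Hz0 [Hzz0 Hdz0]]]. apply Hn.
  assert (H1 := Hdelta' z0 Hz0 p z (ball_le p0 d (delta z0) Hdz0 p Hp) Hzz0).
  assert (H2 := Hdelta' z0 Hz0 p0 z (ball_center p0 (delta z0)) Hzz0).
  replace (F p z - F p0 z) with ((F p z - F p0 z0) - (F p0 z - F p0 z0)) by ring.
  eapply Rle_lt_trans; [apply Rabs_triang|]. rewrite Rabs_Ropp. lra.
Qed.

Lemma RInt_param_close {P : UniformSpace} (F : P -> R -> R) (p0 : P) (a b : R) :
  a <= b ->
  (forall z, a <= z <= b -> forall eps : posreal, exists d : posreal,
     forall p z', ball p0 d p -> Rabs (z' - z) < d -> Rabs (F p z' - F p0 z) < eps) ->
  (forall p, ex_RInt (F p) a b) ->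
  forall eps : posreal, exists d : posreal,
     forall p, ball p0 d p -> Rabs (RInt (F p) a b - RInt (F p0) a b) < eps.
Proof.
  intros Hab Hc Hint eps.
  assert (Hl : 0 < b - a + 1) by lra.
  destruct (uniform_closeness_on_segment F p0 a b Hc
              (mkposreal _ (Rdiv_lt_0_compat _ _ (cond_pos (pos_div_2 eps)) Hl)))
    as [d Hd].
  exists d. intros p Hp. simpl in Hd.
  rewrite <- (RInt_minus (V := R_CompleteNormedModule)) by apply Hint.
  eapply Rle_lt_trans.
  { apply abs_RInt_le_const; [exact Hab | | intros z Hz; left; exact (Hd p z Hp Hz)].
    apply (ex_RInt_minus (V := R_CompleteNormedModule)); apply Hint. }
  apply Rle_lt_trans with ((b - a + 1) * (eps / 2 / (b - a + 1))).
  - apply Rmult_le_compat_r; [|lra].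
    left. apply Rdiv_lt_0_compat; [apply (cond_pos (pos_div_2 eps)) | lra].
  - replace ((b - a + 1) * (eps / 2 / (b - a + 1))) with (eps / 2) by (field; lra).
    pose proof (cond_pos eps). lra.
Qed.

Lemma cont4_RInt_z F lo hi : lo <= hi -> cont4 F ->
  cont4 (fun x y _ t => RInt (fun z => F x y z t) lo hi).
Proof.
  intros Hlh HF x y z t eps Heps.
  set (G := fun (p : R * R * R) z => F (fst (fst p)) (snd (fst p)) z (snd p)).
  destruct (RInt_param_close G (x, y, t) lo hi Hlh) with (eps := mkposreal eps Heps)
    as [d Hd].
  - intros z0 _ e. destruct (HF x y z0 t e (cond_pos e)) as [d [Hd Hclose]].
    exists (mkposreal d Hd). intros [[x' y'] t'] z' [[Hx Hy] Ht] Hz. now apply Hclose.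
  - intros [[x' y'] t']. apply (ex_RInt_continuous (V := R_CompleteNormedModule)).
    intros z0 _. unfold G; simpl. restrict_cont4 HF.
  - exists d. split; [apply cond_pos|]. intros x' y' z' t' Hx Hy Hz Ht.
    exact (Hd (x', y', t') (conj (conj Hx Hy) Ht)).
Qed.

Lemma cont3_of_cont4 (F : field3) : cont4 (fun x y z _ => F x y z) -> cont3 F.
Proof.
  intros HF x y z eps Heps. destruct (HF x y z 0 eps Heps) as [d [Hd Hclose]].
  exists d; split; [exact Hd|]. intros; apply (Hclose _ _ _ 0); try assumption.
  rewrite Rminus_eq_0, Rabs_R0; exact Hd.
Qed.

Lemma cont4_freeze_t F t0 : cont4 F -> cont4 (fun x y z _ => F x y z t0).
Proof.
  intros HF x y z t eps Heps. destruct (HF x y z t0 eps Heps) as [d [Hd Hclose]].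
  exists d; split; [exact Hd|]. intros; apply Hclose; try assumption.
  rewrite Rminus_eq_0, Rabs_R0; exact Hd.
Qed.

Lemma cont4_freeze_zt F z0 t0 : cont4 F -> cont4 (fun x y _ _ => F x y z0 t0).
Proof.
  intros HF x y z t eps Heps. destruct (HF x y z0 t0 eps Heps) as [d [Hd Hclose]].
  exists d; split; [exact Hd|]. intros; apply Hclose; try assumption;
  rewrite Rminus_eq_0, Rabs_R0; exact Hd.
Qed.

Lemma cont4_scale_z F t0 : cont4 F -> cont4 (fun x y s z => F x y (z * s) t0).
Proof.
  intros HF x y s z eps Heps. destruct (HF x y (z * s) t0 eps Heps) as [d [Hd Hclose]].
  assert (Hmult : continuous (fun p : R * R => fst p * snd p) (z, s))
    by exact (continuous_mult fst snd (z, s) (continuous_fst z s) (continuous_snd z s)).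
  destruct (proj1 (filterlim_locally _ _) Hmult (mkposreal d Hd)) as [e He].
  exists (Rmin d e). split; [apply Rmin_glb_lt; [exact Hd | apply cond_pos]|].
  intros x' y' s' z' Hx Hy Hs Hz. pose proof (Rmin_l d e). pose proof (Rmin_r d e).
  apply Hclose; try lra.
  - exact (He (z', s') (conj (Rlt_le_trans _ _ _ Hz (Rmin_r d e))
                                (Rlt_le_trans _ _ _ Hs (Rmin_r d e)))).
  - rewrite Rminus_eq_0, Rabs_R0; exact Hd.
Qed.

(* [int_0^z H = z int_0^1 H(z s) ds] turns the variable bound into a parameter. *)
Lemma cont4_RInt_0_z H t0 : cont4 H -> cont4 (fun x y z _ => RInt (fun s => H x y s t0) 0 z).
Proof.
  intros HH.
  apply (cont4_ext (fun x y z _ => z * RInt (fun s => H x y (z * s) t0) 0 1)).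
  - apply cont4_mult; [apply cont4_zfun; intros; apply continuous_id|].
    apply (cont4_swap_zt (fun x y _ z => RInt (fun s => H x y (z * s) t0) 0 1)).
    apply (cont4_RInt_z (fun x y s z => H x y (z * s) t0)); [lra | now apply cont4_scale_z].
  - intros x y z _.
    rewrite <- (Rmult_0_r z) at 1. rewrite <- (Rmult_1_r z) at 2.
    rewrite <- (Rplus_0_r (z * 0)), <- (Rplus_0_r (z * 1)), <- RInt_comp_lin.
    + rewrite <- (RInt_scal (V := R_CompleteNormedModule)).
      * apply RInt_ext; intros s _. unfold scal; simpl; unfold mult; simpl. now rewrite Rplus_0_r.
      * apply (ex_RInt_continuous (V := R_CompleteNormedModule)); intros.
        pose proof (cont4_scale_z H t0 HH) as HS. restrict_cont4 HS.
    + apply (ex_RInt_continuous (V := R_CompleteNormedModule)); intros. restrict_cont4 HH.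
Qed.

Lemma is_derive_RInt_param_cont (f df : R -> R -> R) a b x :
  (forall s z, is_derive (fun u => f u z) s (df s z)) ->
  (forall s z, continuous (f s) z) ->
  (forall s z, continuity_2d_pt df s z) ->
  is_derive (fun s => RInt (f s) a b) x (RInt (df x) a b).
Proof.
  intros Hd Hc Hdc.
  assert (Edf : forall s z, Derive (fun u => f u z) s = df s z)
    by (intros; apply is_derive_unique, Hd).
  rewrite (RInt_ext (df x) (fun z => Derive (fun u => f u z) x)) by (intros; now rewrite Edf).
  apply is_derive_RInt_param.
  - exists (mkposreal 1 Rlt_0_1). intros s _ z _. eexists. apply Hd.
  - intros z _. apply (continuity_2d_pt_ext df); [intros; now rewrite Edf | apply Hdc].
  - exists (mkposreal 1 Rlt_0_1). intros s _.
    apply (ex_RInt_continuous (V := R_CompleteNormedModule)). intros; apply Hc.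
Qed.

(** * Integration over the periodicity cell *)

(* [int_Omega a b F t] is [int3 a b (slice F t)] by conversion. *)
Definition int_z (F : field4) x y t : R := RInt (fun z => F x y z t) (-1) 1.
Definition int_yz (b : R) (F : field4) x t : R := RInt (fun y => int_z F x y t) 0 (2 * PI / b).
Definition int_Omega (a b : R) (F : field4) t : R := RInt (fun x => int_yz b F x t) 0 (2 * PI / a).

Definition slice (f : field4) (t : R) : field3 := fun x y z => f x y z t.

Lemma period_pos a : 0 < a -> 0 < 2 * PI / a.
Proof. intros. apply Rdiv_lt_0_compat; [pose proof PI_RGT_0|]; lra. Qed.

Section SliceIntegrals.

Variables a b : R.
Hypotheses (Ha : 0 < a) (Hb : 0 < b).

Lemma cont4_int_z F : cont4 F -> cont4 (fun x y _ t => int_z F x y t).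
Proof. intros. apply cont4_RInt_z; [lra | assumption]. Qed.

Lemma cont4_int_yz F : cont4 F -> cont4 (fun x _ _ t => int_yz b F x t).
Proof.
  intros HF. apply (cont4_RInt_z (fun x _ y t => int_z F x y t)).
  - left; now apply period_pos.
  - apply (cont4_swap_yz (fun x y _ t => int_z F x y t)), cont4_int_z, HF.
Qed.

Lemma ex_RInt_z F x y t lo hi : cont4 F -> ex_RInt (fun z => F x y z t) lo hi.
Proof.
  intros HF. apply (ex_RInt_continuous (V := R_CompleteNormedModule)); intros. restrict_cont4 HF.
Qed.

Lemma ex_RInt_y F x t lo hi : cont4 F -> ex_RInt (fun y => int_z F x y t) lo hi.
Proof.
  intros HF. pose proof (cont4_int_z F HF) as HI.
  apply (ex_RInt_continuous (V := R_CompleteNormedModule)); intros. restrict_cont4 HI.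
Qed.

Lemma ex_RInt_x F t lo hi : cont4 F -> ex_RInt (fun x => int_yz b F x t) lo hi.
Proof.
  intros HF. pose proof (cont4_int_yz F HF) as HI.
  apply (ex_RInt_continuous (V := R_CompleteNormedModule)); intros. restrict_cont4 HI.
Qed.

Lemma int_Omega_ext F G t : (forall x y z, -1 < z < 1 -> F x y z t = G x y z t) ->
  int_Omega a b F t = int_Omega a b G t.
Proof.
  intros H. apply RInt_ext; intros x _. apply RInt_ext; intros y _. apply RInt_ext; intros z Hz.
  rewrite Rmin_left, Rmax_right in Hz by lra. now apply H.
Qed.

Lemma int_Omega_plus F G t : cont4 F -> cont4 G ->
  int_Omega a b (fun x y z t => F x y z t + G x y z t) t = int_Omega a b F t + int_Omega a b G t.
Proof.
  intros HF HG. unfold int_Omega.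
  rewrite <- (RInt_plus (V := R_CompleteNormedModule)) by now apply ex_RInt_x.
  apply RInt_ext; intros x _. unfold int_yz.
  rewrite <- (RInt_plus (V := R_CompleteNormedModule)) by now apply ex_RInt_y.
  apply RInt_ext; intros y _. unfold int_z.
  now apply (RInt_plus (V := R_CompleteNormedModule)); apply ex_RInt_z.
Qed.

Lemma int_Omega_scal c F t : cont4 F ->
  int_Omega a b (fun x y z t => c * F x y z t) t = c * int_Omega a b F t.
Proof.
  intros HF. unfold int_Omega.
  rewrite <- (RInt_scal (V := R_CompleteNormedModule)) by now apply ex_RInt_x.
  apply RInt_ext; intros x _. unfold int_yz.
  rewrite <- (RInt_scal (V := R_CompleteNormedModule)) by now apply ex_RInt_y.
  apply RInt_ext; intros y _. unfold int_z.
  now apply (RInt_scal (V := R_CompleteNormedModule)); apply ex_RInt_z.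
Qed.

Lemma int_Omega_opp F t : cont4 F ->
  int_Omega a b (fun x y z t => - F x y z t) t = - int_Omega a b F t.
Proof.
  intros HF. rewrite <- (Rmult_1_l (int_Omega a b F t)), Ropp_mult_distr_l, <- int_Omega_scal
    by exact HF.
  apply int_Omega_ext; intros; ring.
Qed.

Lemma int_Omega_minus F G t : cont4 F -> cont4 G ->
  int_Omega a b (fun x y z t => F x y z t - G x y z t) t = int_Omega a b F t - int_Omega a b G t.
Proof.
  intros HF HG. unfold Rminus at 2.
  rewrite <- int_Omega_opp, <- int_Omega_plus by (try apply cont4_opp; assumption). reflexivity.
Qed.

Lemma int_Omega_le F G t : cont4 F -> cont4 G ->
  (forall x y z, -1 < z < 1 -> F x y z t <= G x y z t) -> int_Omega a b F t <= int_Omega a b G t.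
Proof.
  intros HF HG H. apply RInt_le; try (left; apply period_pos; assumption); try now apply ex_RInt_x.
  intros x _. apply RInt_le; try (left; apply period_pos; assumption); try now apply ex_RInt_y.
  intros y _. apply RInt_le; try lra; try now apply ex_RInt_z.
  intros z Hz; now apply H.
Qed.

Lemma int_Omega_nonneg F t : cont4 F ->
  (forall x y z, -1 < z < 1 -> 0 <= F x y z t) -> 0 <= int_Omega a b F t.
Proof.
  intros HF H.
  apply RInt_ge_0; try (left; apply period_pos; assumption); try now apply ex_RInt_x.
  intros x _. apply RInt_ge_0; try (left; apply period_pos; assumption); try now apply ex_RInt_y.
  intros y _. apply RInt_ge_0; try lra; try now apply ex_RInt_z.
  intros z Hz; now apply H.
Qed.

End SliceIntegrals.

Section FirstOrderFields.

Variable F : field4.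
Hypothesis HF : C1_4 F.

Lemma C1_4_ex_dx x y z t : ex_derive (fun s => F s y z t) x.
Proof. exact (proj1 (proj1 HF x y z t)). Qed.
Lemma C1_4_ex_dy x y z t : ex_derive (fun s => F x s z t) y.
Proof. exact (proj1 (proj2 (proj1 HF x y z t))). Qed.
Lemma C1_4_ex_dz x y z t : ex_derive (fun s => F x y s t) z.
Proof. exact (proj1 (proj2 (proj2 (proj1 HF x y z t)))). Qed.
Lemma C1_4_ex_dt x y z t : ex_derive (fun s => F x y z s) t.
Proof. exact (proj2 (proj2 (proj2 (proj1 HF x y z t)))). Qed.
Lemma C1_4_cont : cont4 F.
Proof. exact (proj1 (proj2 HF)). Qed.
Lemma C1_4_cont_dx : cont4 (dx F).
Proof. exact (proj1 (proj2 (proj2 HF))). Qed.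
Lemma C1_4_cont_dy : cont4 (dy F).
Proof. exact (proj1 (proj2 (proj2 (proj2 HF)))). Qed.
Lemma C1_4_cont_dz : cont4 (dz F).
Proof. exact (proj1 (proj2 (proj2 (proj2 (proj2 HF))))). Qed.
Lemma C1_4_cont_dt : cont4 (dt F).
Proof. exact (proj2 (proj2 (proj2 (proj2 (proj2 HF))))). Qed.

End FirstOrderFields.

Definition walls (F : field4) t := forall x y, F x y 1 t = 0 /\ F x y (-1) t = 0.

Lemma RInt_zero lo hi : RInt (fun _ => 0) lo hi = 0.
Proof. rewrite RInt_const. apply Rmult_0_r. Qed.

Section DerivativesOfSliceIntegrals.

Variables a b : R.
Hypothesis Hb : 0 < b.
Variable F : field4.
Hypothesis HF : C1_4 F.

Let HF0 : cont4 F := C1_4_cont F HF.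
Let HFx : cont4 (dx F) := C1_4_cont_dx F HF.
Let HFy : cont4 (dy F) := C1_4_cont_dy F HF.
Let HFz : cont4 (dz F) := C1_4_cont_dz F HF.
Let HFt : cont4 (dt F) := C1_4_cont_dt F HF.

Lemma is_derive_int_z_t x y t : is_derive (fun s => int_z F x y s) t (int_z (dt F) x y t).
Proof.
  apply (is_derive_RInt_param_cont (fun s z => F x y z s) (fun s z => dt F x y z s)).
  - intros s z. apply Derive_correct, (C1_4_ex_dt F HF).
  - intros s z. restrict_cont4 HF0.
  - intros s z. restrict_cont4 HFt.
Qed.

Lemma is_derive_int_Omega_t t : is_derive (int_Omega a b F) t (int_Omega a b (dt F) t).
Proof.
  pose proof (cont4_int_z F HF0) as C1. pose proof (cont4_int_z _ HFt) as D1.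
  pose proof (cont4_int_yz b Hb F HF0) as C2. pose proof (cont4_int_yz b Hb _ HFt) as D2.
  apply (is_derive_RInt_param_cont (fun s x => int_yz b F x s) (fun s x => int_yz b (dt F) x s)).
  - intros s x.
    apply (is_derive_RInt_param_cont (fun s y => int_z F x y s) (fun s y => int_z (dt F) x y s)).
    + intros; apply is_derive_int_z_t.
    + intros. restrict_cont4 C1.
    + intros. restrict_cont4 D1.
  - intros. restrict_cont4 C2.
  - intros. restrict_cont4 D2.
Qed.

Lemma is_derive_int_yz_x x t : is_derive (fun s => int_yz b F s t) x (int_yz b (dx F) x t).
Proof.
  pose proof (cont4_int_z F HF0) as C1. pose proof (cont4_int_z _ HFx) as D1.
  apply (is_derive_RInt_param_cont (fun s y => int_z F s y t) (fun s y => int_z (dx F) s y t)).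
  - intros s y.
    apply (is_derive_RInt_param_cont (fun s z => F s y z t) (fun s z => dx F s y z t)).
    + intros; apply Derive_correct, (C1_4_ex_dx F HF).
    + intros. restrict_cont4 HF0.
    + intros. restrict_cont4 HFx.
  - intros. restrict_cont4 C1.
  - intros. restrict_cont4 D1.
Qed.

Lemma is_derive_int_z_y x y t : is_derive (fun s => int_z F x s t) y (int_z (dy F) x y t).
Proof.
  apply (is_derive_RInt_param_cont (fun s z => F x s z t) (fun s z => dy F x s z t)).
  - intros; apply Derive_correct, (C1_4_ex_dy F HF).
  - intros. restrict_cont4 HF0.
  - intros. restrict_cont4 HFy.
Qed.

Lemma int_Omega_dx_periodic t : periodic4 a b F -> int_Omega a b (dx F) t = 0.
Proof.
  intros Hper. pose proof (cont4_int_yz b Hb _ HFx) as D2. unfold int_Omega.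
  rewrite (RInt_ext _ (Derive (fun s => int_yz b F s t))).
  2: { intros x _. symmetry. apply is_derive_unique, is_derive_int_yz_x. }
  rewrite RInt_Derive.
  - replace (2 * PI / a) with (0 + 2 * PI / a) by ring.
    unfold int_yz, int_z. rewrite Rminus_diag_eq; [reflexivity|].
    apply RInt_ext; intros y _; apply RInt_ext; intros z _. apply Hper.
  - intros x _. eexists. apply is_derive_int_yz_x.
  - intros x _. apply (continuous_ext (fun s => int_yz b (dx F) s t)).
    + intros s. symmetry. apply is_derive_unique, is_derive_int_yz_x.
    + restrict_cont4 D2.
Qed.

Lemma int_Omega_dy_periodic t : periodic4 a b F -> int_Omega a b (dy F) t = 0.
Proof.
  intros Hper. pose proof (cont4_int_z _ HFy) as D1. unfold int_Omega.
  transitivity (RInt (fun _ => 0) 0 (2 * PI / a)); [|apply RInt_zero].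
  apply RInt_ext; intros x _. unfold int_yz.
  rewrite (RInt_ext _ (Derive (fun s => int_z F x s t))).
  2: { intros y _. symmetry. apply is_derive_unique, is_derive_int_z_y. }
  rewrite RInt_Derive.
  - replace (2 * PI / b) with (0 + 2 * PI / b) by ring.
    unfold int_z. rewrite Rminus_diag_eq; [reflexivity|].
    apply RInt_ext; intros z _. apply Hper.
  - intros y _. eexists. apply is_derive_int_z_y.
  - intros y _. apply (continuous_ext (fun s => int_z (dy F) x s t)).
    + intros s. symmetry. apply is_derive_unique, is_derive_int_z_y.
    + restrict_cont4 D1.
Qed.

Lemma int_Omega_dz_walls t : walls F t -> int_Omega a b (dz F) t = 0.
Proof.
  intros Hwall. unfold int_Omega.
  transitivity (RInt (fun _ => 0) 0 (2 * PI / a)); [|apply RInt_zero].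
  apply RInt_ext; intros x _. unfold int_yz.
  transitivity (RInt (fun _ => 0) 0 (2 * PI / b)); [|apply RInt_zero].
  apply RInt_ext; intros y _. unfold int_z, dz.
  rewrite (RInt_Derive (fun s => F x y s t)).
  - destruct (Hwall x y) as [-> ->]. apply Rminus_diag_eq; reflexivity.
  - intros; apply (C1_4_ex_dz F HF).
  - intros. restrict_cont4 HFz.
Qed.

End DerivativesOfSliceIntegrals.

Section ProductRules.

Variables F G : field4.
Hypotheses (HF : C1_4 F) (HG : C1_4 G).

Lemma dx_mult x y z t : dx (fun x y z t => F x y z t * G x y z t) x y z t
  = dx F x y z t * G x y z t + F x y z t * dx G x y z t.
Proof. apply Derive_mult; [apply (C1_4_ex_dx F HF) | apply (C1_4_ex_dx G HG)]. Qed.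

Lemma dy_mult x y z t : dy (fun x y z t => F x y z t * G x y z t) x y z t
  = dy F x y z t * G x y z t + F x y z t * dy G x y z t.
Proof. apply Derive_mult; [apply (C1_4_ex_dy F HF) | apply (C1_4_ex_dy G HG)]. Qed.

Lemma dz_mult x y z t : dz (fun x y z t => F x y z t * G x y z t) x y z t
  = dz F x y z t * G x y z t + F x y z t * dz G x y z t.
Proof. apply Derive_mult; [apply (C1_4_ex_dz F HF) | apply (C1_4_ex_dz G HG)]. Qed.

Lemma dt_mult x y z t : dt (fun x y z t => F x y z t * G x y z t) x y z t
  = dt F x y z t * G x y z t + F x y z t * dt G x y z t.
Proof. apply Derive_mult; [apply (C1_4_ex_dt F HF) | apply (C1_4_ex_dt G HG)]. Qed.

Lemma C1_4_plus : C1_4 (fun x y z t => F x y z t + G x y z t).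
Proof.
  split; [|split; [|split; [|split; [|split]]]].
  - intros x y z t. repeat split; apply (ex_derive_plus (K := R_AbsRing) (V := R_NormedModule)).
    + apply (C1_4_ex_dx F HF).
    + apply (C1_4_ex_dx G HG).
    + apply (C1_4_ex_dy F HF).
    + apply (C1_4_ex_dy G HG).
    + apply (C1_4_ex_dz F HF).
    + apply (C1_4_ex_dz G HG).
    + apply (C1_4_ex_dt F HF).
    + apply (C1_4_ex_dt G HG).
  - exact (cont4_plus F G (C1_4_cont F HF) (C1_4_cont G HG)).
  - apply (cont4_ext (fun x y z t => dx F x y z t + dx G x y z t));
      [exact (cont4_plus _ _ (C1_4_cont_dx F HF) (C1_4_cont_dx G HG)) |].
    intros. apply Derive_plus; [apply (C1_4_ex_dx F HF) | apply (C1_4_ex_dx G HG)].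
  - apply (cont4_ext (fun x y z t => dy F x y z t + dy G x y z t));
      [exact (cont4_plus _ _ (C1_4_cont_dy F HF) (C1_4_cont_dy G HG)) |].
    intros. apply Derive_plus; [apply (C1_4_ex_dy F HF) | apply (C1_4_ex_dy G HG)].
  - apply (cont4_ext (fun x y z t => dz F x y z t + dz G x y z t));
      [exact (cont4_plus _ _ (C1_4_cont_dz F HF) (C1_4_cont_dz G HG)) |].
    intros. apply Derive_plus; [apply (C1_4_ex_dz F HF) | apply (C1_4_ex_dz G HG)].
  - apply (cont4_ext (fun x y z t => dt F x y z t + dt G x y z t));
      [exact (cont4_plus _ _ (C1_4_cont_dt F HF) (C1_4_cont_dt G HG)) |].
    intros. apply Derive_plus; [apply (C1_4_ex_dt F HF) | apply (C1_4_ex_dt G HG)].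
Qed.

Let cont4_product_rule (DF DG : field4) : cont4 DF -> cont4 DG ->
  cont4 (fun x y z t => DF x y z t * G x y z t + F x y z t * DG x y z t).
Proof.
  intros HDF HDG. apply cont4_plus; apply cont4_mult;
    [exact HDF | exact (C1_4_cont G HG) | exact (C1_4_cont F HF) | exact HDG].
Qed.

Lemma C1_4_mult : C1_4 (fun x y z t => F x y z t * G x y z t).
Proof.
  split; [|split; [|split; [|split; [|split]]]].
  - intros x y z t. repeat split; apply ex_derive_mult.
    + apply (C1_4_ex_dx F HF).
    + apply (C1_4_ex_dx G HG).
    + apply (C1_4_ex_dy F HF).
    + apply (C1_4_ex_dy G HG).
    + apply (C1_4_ex_dz F HF).
    + apply (C1_4_ex_dz G HG).
    + apply (C1_4_ex_dt F HF).
    + apply (C1_4_ex_dt G HG).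
  - exact (cont4_mult F G (C1_4_cont F HF) (C1_4_cont G HG)).
  - exact (cont4_ext _ _ (cont4_product_rule _ _ (C1_4_cont_dx F HF) (C1_4_cont_dx G HG)) dx_mult).
  - exact (cont4_ext _ _ (cont4_product_rule _ _ (C1_4_cont_dy F HF) (C1_4_cont_dy G HG)) dy_mult).
  - exact (cont4_ext _ _ (cont4_product_rule _ _ (C1_4_cont_dz F HF) (C1_4_cont_dz G HG)) dz_mult).
  - exact (cont4_ext _ _ (cont4_product_rule _ _ (C1_4_cont_dt F HF) (C1_4_cont_dt G HG)) dt_mult).
Qed.

End ProductRules.

Lemma C1_4_zfun (W : R -> R) : (forall z, ex_derive W z) -> (forall z, continuous (Derive W) z) ->
  C1_4 (fun _ _ z _ => W z).
Proof.
  intros HW HdW.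
  split; [|split; [|split; [|split; [|split]]]].
  - intros x y z t. split; [|split; [|split]];
      [apply ex_derive_const | apply ex_derive_const | apply HW | apply ex_derive_const].
  - apply cont4_zfun. intros z.
    apply (ex_derive_continuous (K := R_AbsRing) (V := R_NormedModule)), HW.
  - apply (cont4_ext (fun _ _ _ _ => 0)); [apply cont4_const | intros; apply (Derive_const (W z))].
  - apply (cont4_ext (fun _ _ _ _ => 0)); [apply cont4_const | intros; apply (Derive_const (W z))].
  - exact (cont4_zfun (Derive W) HdW).
  - apply (cont4_ext (fun _ _ _ _ => 0)); [apply cont4_const | intros; apply (Derive_const (W z))].
Qed.

Lemma C1_4_const c : C1_4 (fun _ _ _ _ => c).
Proof.
  apply (C1_4_zfun (fun _ => c)); intros z; [apply ex_derive_const|].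
  apply (continuous_ext (fun _ => 0));
    [intros; symmetry; apply Derive_const | apply continuous_const].
Qed.

Lemma C1_4_z : C1_4 (fun _ _ z _ => z).
Proof.
  apply (C1_4_zfun (fun z => z)); intros z; [apply ex_derive_id|].
  apply (continuous_ext (fun _ => 1)); [intros; symmetry; apply Derive_id | apply continuous_const].
Qed.

Section Periodicity.

Variables a b : R.

Lemma periodic4_plus F G : periodic4 a b F -> periodic4 a b G ->
  periodic4 a b (fun x y z t => F x y z t + G x y z t).
Proof.
  intros HF HG x y z t. destruct (HF x y z t) as [-> ->], (HG x y z t) as [-> ->]. now split.
Qed.

Lemma periodic4_mult F G : periodic4 a b F -> periodic4 a b G ->
  periodic4 a b (fun x y z t => F x y z t * G x y z t).
Proof.
  intros HF HG x y z t. destruct (HF x y z t) as [-> ->], (HG x y z t) as [-> ->]. now split.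
Qed.

Lemma periodic4_zfun (W : R -> R) : periodic4 a b (fun _ _ z _ => W z).
Proof. now split. Qed.

Lemma Derive_shift (f : R -> R) x c : ex_derive f (x + c) ->
  Derive (fun s => f (s + c)) x = Derive f (x + c).
Proof.
  intros Hf. rewrite Derive_comp; [| exact Hf | auto_derive; trivial].
  replace (Derive (fun s => s + c) x) with 1; [ring|].
  symmetry. apply is_derive_unique. auto_derive; trivial; ring.
Qed.

Lemma periodic4_dx F : C1_4 F -> periodic4 a b F -> periodic4 a b (dx F).
Proof.
  intros HF Hper x y z t. unfold dx. split.
  - rewrite <- Derive_shift by apply (C1_4_ex_dx F HF).
    apply Derive_ext; intros s. exact (proj1 (Hper s y z t)).
  - apply Derive_ext; intros s. exact (proj2 (Hper s y z t)).
Qed.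

Lemma periodic4_dy F : C1_4 F -> periodic4 a b F -> periodic4 a b (dy F).
Proof.
  intros HF Hper x y z t. unfold dy. split.
  - apply Derive_ext; intros s. exact (proj1 (Hper x s z t)).
  - rewrite <- Derive_shift by apply (C1_4_ex_dy F HF).
    apply Derive_ext; intros s. exact (proj2 (Hper x s z t)).
Qed.

End Periodicity.

Definition advect (q1 q2 q3 f : field4) : field4 := fun x y z t =>
  q1 x y z t * dx f x y z t + q2 x y z t * dy f x y z t + q3 x y z t * dz f x y z t.

Lemma cont4_advect q1 q2 q3 f : cont4 q1 -> cont4 q2 -> cont4 q3 -> C1_4 f ->
  cont4 (advect q1 q2 q3 f).
Proof.
  intros H1 H2 H3 Hf. unfold advect.
  apply cont4_plus; [apply cont4_plus|]; apply cont4_mult;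
    [exact H1 | exact (C1_4_cont_dx f Hf) | exact H2 | exact (C1_4_cont_dy f Hf)
    | exact H3 | exact (C1_4_cont_dz f Hf)].
Qed.

Definition dot3 (f1 f2 f3 g1 g2 g3 : field4) : field4 := fun x y z t =>
  f1 x y z t * g1 x y z t + f2 x y z t * g2 x y z t + f3 x y z t * g3 x y z t.

Lemma cont4_dot3 f1 f2 f3 g1 g2 g3 : cont4 f1 -> cont4 f2 -> cont4 f3 ->
  cont4 g1 -> cont4 g2 -> cont4 g3 -> cont4 (dot3 f1 f2 f3 g1 g2 g3).
Proof.
  intros. unfold dot3.
  apply cont4_plus; [apply cont4_plus|]; apply cont4_mult; assumption.
Qed.

Lemma periodic4_dot3 a b f1 f2 f3 g1 g2 g3 :
  periodic4 a b f1 -> periodic4 a b f2 -> periodic4 a b f3 ->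
  periodic4 a b g1 -> periodic4 a b g2 -> periodic4 a b g3 ->
  periodic4 a b (dot3 f1 f2 f3 g1 g2 g3).
Proof.
  intros. unfold dot3.
  apply periodic4_plus; [apply periodic4_plus|]; apply periodic4_mult; assumption.
Qed.

Lemma Derive_dot3 (f1 f2 f3 g1 g2 g3 : R -> R) x :
  ex_derive f1 x -> ex_derive f2 x -> ex_derive f3 x ->
  ex_derive g1 x -> ex_derive g2 x -> ex_derive g3 x ->
  Derive (fun s => f1 s * g1 s + f2 s * g2 s + f3 s * g3 s) x
  = (Derive f1 x * g1 x + Derive f2 x * g2 x + Derive f3 x * g3 x)
    + (f1 x * Derive g1 x + f2 x * Derive g2 x + f3 x * Derive g3 x).
Proof.
  intros Hf1 Hf2 Hf3 Hg1 Hg2 Hg3. apply is_derive_unique. auto_derive.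
  - repeat split; [exact Hf1 | exact Hg1 | exact Hf2 | exact Hg2 | exact Hf3 | exact Hg3].
  - change (fun s => f1 s) with f1; change (fun s => f2 s) with f2;
    change (fun s => f3 s) with f3; change (fun s => g1 s) with g1;
    change (fun s => g2 s) with g2; change (fun s => g3 s) with g3. ring.
Qed.

Section DotProducts.

Variables f1 f2 f3 g1 g2 g3 : field4.
Hypotheses (Hf1 : C1_4 f1) (Hf2 : C1_4 f2) (Hf3 : C1_4 f3).
Hypotheses (Hg1 : C1_4 g1) (Hg2 : C1_4 g2) (Hg3 : C1_4 g3).

Lemma C1_4_dot3 : C1_4 (dot3 f1 f2 f3 g1 g2 g3).
Proof.
  unfold dot3. apply C1_4_plus; [apply C1_4_plus|]; apply C1_4_mult;
    [exact Hf1 | exact Hg1 | exact Hf2 | exact Hg2 | exact Hf3 | exact Hg3].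
Qed.

Lemma dx_dot3 x y z t : dx (dot3 f1 f2 f3 g1 g2 g3) x y z t
  = dot3 (dx f1) (dx f2) (dx f3) g1 g2 g3 x y z t + dot3 f1 f2 f3 (dx g1) (dx g2) (dx g3) x y z t.
Proof.
  apply Derive_dot3; [apply (C1_4_ex_dx f1 Hf1) | apply (C1_4_ex_dx f2 Hf2)
    | apply (C1_4_ex_dx f3 Hf3) | apply (C1_4_ex_dx g1 Hg1) | apply (C1_4_ex_dx g2 Hg2)
    | apply (C1_4_ex_dx g3 Hg3)].
Qed.

Lemma dy_dot3 x y z t : dy (dot3 f1 f2 f3 g1 g2 g3) x y z t
  = dot3 (dy f1) (dy f2) (dy f3) g1 g2 g3 x y z t + dot3 f1 f2 f3 (dy g1) (dy g2) (dy g3) x y z t.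
Proof.
  apply Derive_dot3; [apply (C1_4_ex_dy f1 Hf1) | apply (C1_4_ex_dy f2 Hf2)
    | apply (C1_4_ex_dy f3 Hf3) | apply (C1_4_ex_dy g1 Hg1) | apply (C1_4_ex_dy g2 Hg2)
    | apply (C1_4_ex_dy g3 Hg3)].
Qed.

Lemma dz_dot3 x y z t : dz (dot3 f1 f2 f3 g1 g2 g3) x y z t
  = dot3 (dz f1) (dz f2) (dz f3) g1 g2 g3 x y z t + dot3 f1 f2 f3 (dz g1) (dz g2) (dz g3) x y z t.
Proof.
  apply Derive_dot3; [apply (C1_4_ex_dz f1 Hf1) | apply (C1_4_ex_dz f2 Hf2)
    | apply (C1_4_ex_dz f3 Hf3) | apply (C1_4_ex_dz g1 Hg1) | apply (C1_4_ex_dz g2 Hg2)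
    | apply (C1_4_ex_dz g3 Hg3)].
Qed.

Lemma dt_dot3 x y z t : dt (dot3 f1 f2 f3 g1 g2 g3) x y z t
  = dot3 (dt f1) (dt f2) (dt f3) g1 g2 g3 x y z t + dot3 f1 f2 f3 (dt g1) (dt g2) (dt g3) x y z t.
Proof.
  apply Derive_dot3; [apply (C1_4_ex_dt f1 Hf1) | apply (C1_4_ex_dt f2 Hf2)
    | apply (C1_4_ex_dt f3 Hf3) | apply (C1_4_ex_dt g1 Hg1) | apply (C1_4_ex_dt g2 Hg2)
    | apply (C1_4_ex_dt g3 Hg3)].
Qed.

Lemma advect_dot3 q1 q2 q3 x y z t :
  advect q1 q2 q3 (dot3 f1 f2 f3 g1 g2 g3) x y z t
  = dot3 f1 f2 f3 (advect q1 q2 q3 g1) (advect q1 q2 q3 g2) (advect q1 q2 q3 g3) x y z t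
    + dot3 g1 g2 g3 (advect q1 q2 q3 f1) (advect q1 q2 q3 f2) (advect q1 q2 q3 f3) x y z t.
Proof.
  unfold advect at 1. rewrite dx_dot3, dy_dot3, dz_dot3. unfold dot3, advect. ring.
Qed.

End DotProducts.

(* Syntactic, unlike [assumption], which may try costly conversions between unrelated
   [C1_4] or [ex_derive] statements. *)
Ltac exact_hyp :=
  match goal with |- ?G => match goal with H : ?G' |- _ => constr_eq G G'; exact H end end.

Ltac solve_cont4 :=
  repeat lazymatch goal with
  | |- cont4 (advect _ _ _ _) => apply cont4_advect
  | |- cont4 (fun x y z t => advect _ _ _ _ x y z t) => apply cont4_advect
  | |- cont4 (dot3 _ _ _ _ _ _) => apply cont4_dot3
  | |- cont4 (fun x y z t => dot3 _ _ _ _ _ _ x y z t) => apply cont4_dot3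
  | |- C1_4 (dot3 _ _ _ _ _ _) => apply C1_4_dot3
  | |- _ => first
      [ exact_hyp | apply cont4_plus | apply cont4_minus | apply cont4_mult | apply cont4_opp
      | apply cont4_pow | apply cont4_const | apply cont4_zfun ]
  end.

(** * Integral identities on the layer *)

Definition grad_sq (f : field4) : field4 := fun x y z t =>
  dx f x y z t ^ 2 + dy f x y z t ^ 2 + dz f x y z t ^ 2.

Lemma gradsq_slice a b f t : gradsq a b (slice f t) = int_Omega a b (grad_sq f) t.
Proof. reflexivity. Qed.

Lemma cont4_grad_sq f : C1_4 f -> cont4 (grad_sq f).
Proof.
  intros Hf. pose proof (C1_4_cont_dx f Hf). pose proof (C1_4_cont_dy f Hf).
  pose proof (C1_4_cont_dz f Hf). unfold grad_sq. solve_cont4.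
Qed.

Lemma grad_sq_nonneg f x y z t : 0 <= grad_sq f x y z t.
Proof.
  unfold grad_sq. pose proof (pow2_ge_0 (dx f x y z t)). pose proof (pow2_ge_0 (dy f x y z t)).
  pose proof (pow2_ge_0 (dz f x y z t)). lra.
Qed.

Section IntegralIdentities.

Variables a b : R.
Hypothesis Hb : 0 < b.

Lemma int_Omega_div F1 F2 F3 t : C1_4 F1 -> C1_4 F2 -> C1_4 F3 ->
  periodic4 a b F1 -> periodic4 a b F2 -> walls F3 t ->
  int_Omega a b (fun x y z t => dx F1 x y z t + dy F2 x y z t + dz F3 x y z t) t = 0.
Proof.
  intros H1 H2 H3 P1 P2 W3.
  pose proof (C1_4_cont_dx F1 H1). pose proof (C1_4_cont_dy F2 H2). pose proof (C1_4_cont_dz F3 H3).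
  rewrite !int_Omega_plus by (auto; solve_cont4).
  rewrite (int_Omega_dx_periodic a b), (int_Omega_dy_periodic a b), (int_Omega_dz_walls a b);
    auto; ring.
Qed.

Lemma int_Omega_advect q1 q2 q3 f t : C1_4 q1 -> C1_4 q2 -> C1_4 q3 -> C1_4 f ->
  periodic4 a b q1 -> periodic4 a b q2 -> periodic4 a b f ->
  (forall x y z, -1 <= z <= 1 -> dx q1 x y z t + dy q2 x y z t + dz q3 x y z t = 0) ->
  walls (fun x y z t => q3 x y z t * f x y z t) t ->
  int_Omega a b (advect q1 q2 q3 f) t = 0.
Proof.
  intros H1 H2 H3 Hf P1 P2 Pf Hdiv Hwall.
  rewrite <- (int_Omega_div (fun x y z t => q1 x y z t * f x y z t)
    (fun x y z t => q2 x y z t * f x y z t) (fun x y z t => q3 x y z t * f x y z t) t);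
    [| exact (C1_4_mult q1 f H1 Hf) | exact (C1_4_mult q2 f H2 Hf) | exact (C1_4_mult q3 f H3 Hf)
     | exact (periodic4_mult a b q1 f P1 Pf) | exact (periodic4_mult a b q2 f P2 Pf) | exact Hwall].
  apply int_Omega_ext. intros x y z Hz. unfold advect.
  rewrite dx_mult, dy_mult, dz_mult by assumption.
  assert (E : dx q1 x y z t = - dy q2 x y z t - dz q3 x y z t) by (pose proof (Hdiv x y z); lra).
  rewrite E. ring.
Qed.

Lemma int_Omega_mul_lap f t : C2_4 f -> periodic4 a b f -> walls f t ->
  int_Omega a b (fun x y z t => f x y z t * lap f x y z t) t = - gradsq a b (slice f t).
Proof.
  intros [Hf [Hfx [Hfy [Hfz _]]]] Hper Hwall.
  pose proof (C1_4_cont _ Hf). pose proof (cont4_grad_sq f Hf).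
  set (Fx := fun x y z t => f x y z t * dx f x y z t).
  set (Fy := fun x y z t => f x y z t * dy f x y z t).
  set (Fz := fun x y z t => f x y z t * dz f x y z t).
  assert (HFx : C1_4 Fx) by now apply C1_4_mult.
  assert (HFy : C1_4 Fy) by now apply C1_4_mult.
  assert (HFz : C1_4 Fz) by now apply C1_4_mult.
  pose proof (C1_4_cont_dx _ HFx). pose proof (C1_4_cont_dy _ HFy). pose proof (C1_4_cont_dz _ HFz).
  rewrite gradsq_slice.
  transitivity (int_Omega a b (fun x y z t =>
    (dx Fx x y z t + dy Fy x y z t + dz Fz x y z t) + -1 * grad_sq f x y z t) t).
  - apply int_Omega_ext. intros x y z _. unfold Fx, Fy, Fz, lap, grad_sq.
    rewrite dx_mult, dy_mult, dz_mult by assumption. ring.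
  - rewrite int_Omega_plus, int_Omega_scal, int_Omega_div; auto; try solve_cont4.
    + ring.
    + apply periodic4_mult; [|apply periodic4_dx]; assumption.
    + apply periodic4_mult; [|apply periodic4_dy]; assumption.
    + intros x y. unfold Fz. destruct (Hwall x y) as [-> ->]. split; ring.
Qed.

End IntegralIdentities.

Section Poincare.

Variables a b : R.
Hypotheses (Ha : 0 < a) (Hb : 0 < b).

(* Integrating d/dz (z f^2) = f^2 + 2 z f f_z over the layer gives 0, while
   f^2 / 2 - 2 f_z^2 <= f^2 + 2 z f f_z pointwise for |z| < 1. *)
Lemma int_Omega_poincare_z f t : C1_4 f -> walls f t ->
  int_Omega a b (fun x y z t => f x y z t ^ 2) t
    <= 4 * int_Omega a b (fun x y z t => dz f x y z t ^ 2) t.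
Proof.
  intros Hf Hwall.
  pose proof (C1_4_cont _ Hf). pose proof (C1_4_cont_dz _ Hf).
  set (G := fun x y z t => z * (f x y z t * f x y z t)).
  assert (HG : C1_4 G) by (apply C1_4_mult; [apply C1_4_z | now apply C1_4_mult]).
  assert (Hint : int_Omega a b (dz G) t = 0).
  { apply int_Omega_dz_walls; [exact HG|]. intros x y. unfold G.
    destruct (Hwall x y) as [-> ->]. split; ring. }
  assert (Hle : int_Omega a b (fun x y z t => / 2 * f x y z t ^ 2 + -2 * dz f x y z t ^ 2) t
                <= int_Omega a b (dz G) t).
  { apply (int_Omega_le a b Ha Hb); [solve_cont4 | apply (C1_4_cont_dz _ HG) |].
    intros x y z Hz. unfold G.
    rewrite (dz_mult (fun _ _ z _ => z)), (dz_mult f f) by auto using C1_4_z, C1_4_mult.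
    change (dz (fun _ _ z _ => z) x y z t) with (Derive (fun s => s) z). rewrite Derive_id.
    pose proof (pow2_ge_0 (f x y z t + 2 * z * dz f x y z t)).
    pose proof (pow2_ge_0 (dz f x y z t)).
    assert (0 <= 1 - z * z) by nra. nra. }
  rewrite int_Omega_plus, !int_Omega_scal in Hle by solve_cont4. lra.
Qed.

Lemma gradsq_nonneg f t : C1_4 f -> 0 <= gradsq a b (slice f t).
Proof.
  intros Hf. rewrite gradsq_slice.
  apply int_Omega_nonneg;
    [exact Ha | exact Hb | now apply cont4_grad_sq | intros; apply grad_sq_nonneg].
Qed.

Lemma int_Omega_poincare f t : C1_4 f -> walls f t ->
  int_Omega a b (fun x y z t => f x y z t ^ 2) t <= 4 * gradsq a b (slice f t).
Proof.
  intros Hf Hwall. eapply Rle_trans; [now apply int_Omega_poincare_z|].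
  apply Rmult_le_compat_l; [lra|]. rewrite gradsq_slice.
  pose proof (C1_4_cont_dz _ Hf).
  apply int_Omega_le; [exact Ha | exact Hb | solve_cont4 | now apply cont4_grad_sq |].
  intros. unfold grad_sq.
  pose proof (pow2_ge_0 (dx f x y z t)). pose proof (pow2_ge_0 (dy f x y z t)). lra.
Qed.

Lemma int_Omega_sq_eq0 f t : C1_4 f -> walls f t -> gradsq a b (slice f t) = 0 ->
  int_Omega a b (fun x y z t => f x y z t ^ 2) t = 0.
Proof.
  intros Hf Wf Gf. apply Rle_antisym.
  - pose proof (int_Omega_poincare f t Hf Wf). lra.
  - pose proof (C1_4_cont f Hf).
    apply int_Omega_nonneg; [exact Ha | exact Hb | solve_cont4 | intros; apply pow2_ge_0].
Qed.

End Poincare.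

Lemma cont4_lap f : C2_4 f -> cont4 (lap f).
Proof.
  intros (_ & Hx & Hy & Hz & _).
  apply cont4_plus; [apply cont4_plus|];
    [exact (C1_4_cont_dx _ Hx) | exact (C1_4_cont_dy _ Hy) | exact (C1_4_cont_dz _ Hz)].
Qed.

Lemma int_Omega_dot3_lap a b f1 f2 f3 t : 0 < b ->
  C2_4 f1 -> C2_4 f2 -> C2_4 f3 -> periodic4 a b f1 -> periodic4 a b f2 -> periodic4 a b f3 ->
  walls f1 t -> walls f2 t -> walls f3 t ->
  int_Omega a b (dot3 f1 f2 f3 (lap f1) (lap f2) (lap f3)) t
  = - (gradsq a b (slice f1 t) + gradsq a b (slice f2 t)
       + gradsq a b (slice f3 t)).
Proof.
  intros Hb H1 H2 H3 P1 P2 P3 W1 W2 W3. unfold dot3.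
  pose proof (C1_4_cont _ (proj1 H1)). pose proof (C1_4_cont _ (proj1 H2)).
  pose proof (C1_4_cont _ (proj1 H3)).
  pose proof (cont4_lap f1 H1). pose proof (cont4_lap f2 H2). pose proof (cont4_lap f3 H3).
  rewrite !int_Omega_plus
    by (exact Hb || (try apply cont4_plus); apply cont4_mult; assumption).
  rewrite !int_Omega_mul_lap by assumption. ring.
Qed.

(** * The admissible set S *)

Lemma int3_ext a b (g1 g2 : field3) : (forall x y z, -1 < z < 1 -> g1 x y z = g2 x y z) ->
  int3 a b g1 = int3 a b g2.
Proof. exact (int_Omega_ext a b (fun x y z _ => g1 x y z) (fun x y z _ => g2 x y z) 0). Qed.

Lemma gradsq_ext a b (f g : field3) :
  (forall x y z, -1 <= z <= 1 ->
     ex3 f x y z = ex3 g x y z /\ ey3 f x y z = ey3 g x y z /\ ez3 f x y z = ez3 g x y z) ->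
  gradsq a b f = gradsq a b g.
Proof.
  intros H. unfold gradsq. apply int3_ext. intros x y z Hz.
  destruct (H x y z ltac:(lra)) as (-> & -> & ->). reflexivity.
Qed.

Lemma Ifun_ext fl a b Ha Pm u v w h k l w' l' :
  (forall x y z, -1 <= z <= 1 -> w x y z = w' x y z /\ l x y z = l' x y z) ->
  Ifun fl a b Ha Pm u v w h k l = Ifun fl a b Ha Pm u v w' h k l'.
Proof.
  intros H.
  assert (E : forall g1 g2 : field3, (forall x y z, -1 < z < 1 -> g1 x y z = g2 x y z) ->
    int3 a b g1 = int3 a b g2) by (intros; now apply int3_ext).
  unfold Ifun.
  rewrite (E (fun x y z => dU fl Ha z * w x y z * u x y z)
             (fun x y z => dU fl Ha z * w' x y z * u x y z)),
    (E (fun x y z => l x y z * dB fl Ha z * u x y z)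
       (fun x y z => l' x y z * dB fl Ha z * u x y z)),
    (E (fun x y z => w x y z * dB fl Ha z * h x y z)
       (fun x y z => w' x y z * dB fl Ha z * h x y z)),
    (E (fun x y z => l x y z * dU fl Ha z * h x y z)
       (fun x y z => l' x y z * dU fl Ha z * h x y z));
    try reflexivity; intros x y z Hz; destruct (H x y z ltac:(lra)) as [Hw Hl];
    rewrite ?Hw, ?Hl; reflexivity.
Qed.

Lemma admissible3_slice a b f t : C1_4 f -> periodic4 a b f -> walls f t ->
  admissible3 a b (slice f t).
Proof.
  intros Hf Hper Hwall. split; [split; [|split; [|split; [|split]]] | split].
  - intros x y z. split; [|split];
      [apply (C1_4_ex_dx f Hf) | apply (C1_4_ex_dy f Hf) | apply (C1_4_ex_dz f Hf)].
  - apply cont3_of_cont4, (cont4_freeze_t f), (C1_4_cont f Hf).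
  - apply cont3_of_cont4, (cont4_freeze_t (dx f)), (C1_4_cont_dx f Hf).
  - apply cont3_of_cont4, (cont4_freeze_t (dy f)), (C1_4_cont_dy f Hf).
  - apply cont3_of_cont4, (cont4_freeze_t (dz f)), (C1_4_cont_dz f Hf).
  - intros x y z. exact (Hper x y z t).
  - exact Hwall.
Qed.

Lemma bounded_on_layer (W : R -> R) : (forall z, continuous W z) ->
  exists M, forall z, -1 <= z <= 1 -> Rabs (W z) <= M.
Proof.
  intros HW. destruct (continuity_ab_maj (fun z => Rabs (W z)) (-1) 1) as [z0 [Hz0 _]].
  - lra.
  - intros z _. apply (continuity_pt_comp W Rabs); [|apply Rcontinuity_abs].
    apply continuity_pt_filterlim, HW.
  - now exists (Rabs (W z0)).
Qed.

Lemma int_Omega_weighted_product_eq0 a b (W : R -> R) F G t : 0 < a -> 0 < b ->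
  (forall z, continuous W z) -> cont4 F -> cont4 G ->
  int_Omega a b (fun x y z t => F x y z t ^ 2) t = 0 ->
  int_Omega a b (fun x y z t => G x y z t ^ 2) t = 0 ->
  int_Omega a b (fun x y z t => W z * F x y z t * G x y z t) t = 0.
Proof.
  intros Ha Hb HW HF HG ZF ZG. destruct (bounded_on_layer W HW) as [M HM].
  assert (Hbound : forall x y z, -1 < z < 1 ->
    Rabs (W z * F x y z t * G x y z t) <= M / 2 * (F x y z t ^ 2 + G x y z t ^ 2)).
  { intros x y z Hz. specialize (HM z ltac:(lra)).
    rewrite Rmult_assoc, Rabs_mult, Rabs_mult.
    pose proof (Rabs_pos (W z)).
    pose proof (Rabs_pos (F x y z t)). pose proof (Rabs_pos (G x y z t)).
    rewrite <- (pow2_abs (F x y z t)), <- (pow2_abs (G x y z t)).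
    pose proof (pow2_ge_0 (Rabs (F x y z t) - Rabs (G x y z t))).
    assert (Rabs (F x y z t) * Rabs (G x y z t)
            <= (Rabs (F x y z t) ^ 2 + Rabs (G x y z t) ^ 2) / 2) by nra.
    nra. }
  assert (Hup : int_Omega a b (fun x y z t => W z * F x y z t * G x y z t) t
                <= int_Omega a b (fun x y z t => M / 2 * (F x y z t ^ 2 + G x y z t ^ 2)) t).
  { apply int_Omega_le; try assumption; [solve_cont4 | solve_cont4 |].
    intros x y z Hz. pose proof (Hbound x y z Hz).
    pose proof (Rle_abs (W z * F x y z t * G x y z t)). lra. }
  assert (Hlow : int_Omega a b (fun x y z t => - (M / 2 * (F x y z t ^ 2 + G x y z t ^ 2))) t
                 <= int_Omega a b (fun x y z t => W z * F x y z t * G x y z t) t).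
  { apply int_Omega_le; try assumption; [solve_cont4 | solve_cont4 |].
    intros x y z Hz. pose proof (Hbound x y z Hz) as B.
    pose proof (Rle_abs (- (W z * F x y z t * G x y z t))). rewrite Rabs_Ropp in *. lra. }
  rewrite int_Omega_opp, int_Omega_scal, int_Omega_plus, ZF, ZG in Hlow
    by (assumption || solve_cont4).
  rewrite int_Omega_scal, int_Omega_plus, ZF, ZG in Hup by (assumption || solve_cont4).
  lra.
Qed.

Lemma sqrt_sum_pos gu gv gw gh gk gl c : 0 <= gu -> 0 <= gv -> 0 <= gw ->
  0 <= gh -> 0 <= gk -> 0 <= gl -> 0 < c -> 0 < gu + gw + c * (gh + gl) ->
  sqrt (gu + gv + gw) + sqrt (gh + gk + gl) > 0.
Proof.
  intros. pose proof (sqrt_pos (gu + gv + gw)). pose proof (sqrt_pos (gh + gk + gl)).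
  destruct (Rlt_le_dec 0 (gu + gw)).
  - assert (0 < sqrt (gu + gv + gw)) by (apply sqrt_lt_R0; lra). lra.
  - assert (0 < sqrt (gh + gk + gl)) by (apply sqrt_lt_R0; nra). lra.
Qed.

Section SolenoidalExtension.

Variables (a b : R) (u v w : field4) (t : R).
Hypotheses (Cu : C2_4 u) (Cv : C2_4 v) (Cw : C1_4 w).
Hypotheses (Pu : periodic4 a b u) (Pv : periodic4 a b v) (Pw : periodic4 a b w).
Hypothesis Ww : walls w t.
Hypothesis Hdiv : forall x y z, -1 <= z <= 1 -> dx u x y z t + dy v x y z t + dz w x y z t = 0.

Let G : field4 := fun x y z t => dx u x y z t + dy v x y z t.

Let CG : C1_4 G.
Proof. apply C1_4_plus; [exact (proj1 (proj2 Cu)) | exact (proj1 (proj2 (proj2 Cv)))]. Qed.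

(* S asks for fields that are solenoidal on all of R^3, while the perturbation is
   solenoidal on the layer only; integrating the constraint from the midplane keeps [w]
   on the layer. *)
Definition solenoidal_extension : field3 := fun x y z => w x y 0 t - RInt (fun s => G x y s t) 0 z.

Lemma solenoidal_extension_dz x y z :
  is_derive (fun s => solenoidal_extension x y s) z (- G x y z t).
Proof.
  pose proof (C1_4_cont G CG) as HG.
  unfold solenoidal_extension. auto_derive; [|ring]. split; [|split; [|exact I]].
  - apply (ex_RInt_continuous (V := R_CompleteNormedModule)); intros. restrict_cont4 HG.
  - exists (mkposreal 1 Rlt_0_1). intros s _. apply continuity_pt_filterlim. restrict_cont4 HG.
Qed.

Lemma solenoidal_extension_dx x y z : is_derive (fun s => solenoidal_extension s y z) x
  (dx w x y 0 t - RInt (fun s => dx G x y s t) 0 z).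
Proof.
  pose proof (C1_4_cont G CG) as HG. pose proof (C1_4_cont_dx G CG) as HGx.
  apply (is_derive_minus (K := R_AbsRing) (V := R_NormedModule)).
  - apply Derive_correct, (C1_4_ex_dx w Cw).
  - apply (is_derive_RInt_param_cont (fun s r => G s y r t) (fun s r => dx G s y r t)).
    + intros; apply Derive_correct, (C1_4_ex_dx G CG).
    + intros. restrict_cont4 HG.
    + intros. restrict_cont4 HGx.
Qed.

Lemma solenoidal_extension_dy x y z : is_derive (fun s => solenoidal_extension x s z) y
  (dy w x y 0 t - RInt (fun s => dy G x y s t) 0 z).
Proof.
  pose proof (C1_4_cont G CG) as HG. pose proof (C1_4_cont_dy G CG) as HGy.
  apply (is_derive_minus (K := R_AbsRing) (V := R_NormedModule)).
  - apply Derive_correct, (C1_4_ex_dy w Cw).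
  - apply (is_derive_RInt_param_cont (fun s r => G x s r t) (fun s r => dy G x s r t)).
    + intros; apply Derive_correct, (C1_4_ex_dy G CG).
    + intros. restrict_cont4 HG.
    + intros. restrict_cont4 HGy.
Qed.

Lemma solenoidal_extension_on_layer x y z : -1 <= z <= 1 -> solenoidal_extension x y z = w x y z t.
Proof.
  intros Hz. unfold solenoidal_extension.
  rewrite (RInt_ext _ (fun s => -1 * dz w x y s t)).
  - rewrite (RInt_scal (V := R_CompleteNormedModule)).
    + unfold dz. rewrite (RInt_Derive (fun s => w x y s t)).
      * unfold scal; simpl; unfold mult; simpl. ring.
      * intros; apply (C1_4_ex_dz w Cw).
      * intros. pose proof (C1_4_cont_dz w Cw) as Hwz. restrict_cont4 Hwz.
    + apply (ex_RInt_continuous (V := R_CompleteNormedModule)); intros.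
      pose proof (C1_4_cont_dz w Cw) as Hwz. restrict_cont4 Hwz.
  - intros s Hs. unfold G. pose proof (Hdiv x y s).
    assert (-1 <= s <= 1) by (destruct (Rle_dec 0 z);
      [rewrite Rmin_left, Rmax_right in Hs | rewrite Rmin_right, Rmax_left in Hs]; lra).
    lra.
Qed.

Let periodic_G : periodic4 a b G.
Proof.
  apply periodic4_plus; [apply periodic4_dx | apply periodic4_dy];
    [exact (proj1 Cu) | exact Pu | exact (proj1 Cv) | exact Pv].
Qed.

Lemma solenoidal_extension_admissible : admissible3 a b solenoidal_extension.
Proof.
  pose proof (C1_4_cont G CG) as HG.
  pose proof (C1_4_cont_dx G CG) as HGx. pose proof (C1_4_cont_dy G CG) as HGy.
  split; [split; [|split; [|split; [|split]]] | split].
  - intros x y z. split; [|split]; eexists;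
      [apply solenoidal_extension_dx | apply solenoidal_extension_dy
      | apply solenoidal_extension_dz].
  - apply cont3_of_cont4, cont4_minus;
      [apply (cont4_freeze_zt w), (C1_4_cont w Cw) | apply (cont4_RInt_0_z G t HG)].
  - apply cont3_of_cont4.
    apply (cont4_ext (fun x y z _ => dx w x y 0 t - RInt (fun s => dx G x y s t) 0 z)).
    + apply cont4_minus;
        [apply (cont4_freeze_zt (dx w)), (C1_4_cont_dx w Cw) | apply (cont4_RInt_0_z _ t HGx)].
    + intros. apply is_derive_unique, solenoidal_extension_dx.
  - apply cont3_of_cont4.
    apply (cont4_ext (fun x y z _ => dy w x y 0 t - RInt (fun s => dy G x y s t) 0 z)).
    + apply cont4_minus;
        [apply (cont4_freeze_zt (dy w)), (C1_4_cont_dy w Cw) | apply (cont4_RInt_0_z _ t HGy)].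
    + intros. apply is_derive_unique, solenoidal_extension_dy.
  - apply cont3_of_cont4.
    apply (cont4_ext (fun x y z _ => - G x y z t)).
    + apply cont4_opp, (cont4_freeze_t G t HG).
    + intros. apply is_derive_unique, solenoidal_extension_dz.
  - intros x y z. unfold solenoidal_extension.
    destruct (Pw x y 0 t) as [-> ->]. split; f_equal; apply RInt_ext; intros s _; apply periodic_G.
  - intros x y. rewrite !solenoidal_extension_on_layer by lra. apply Ww.
Qed.

Lemma solenoidal_extension_div x y z :
  ex3 (slice u t) x y z + ey3 (slice v t) x y z + ez3 solenoidal_extension x y z = 0.
Proof.
  replace (ez3 solenoidal_extension x y z) with (- G x y z t)
    by (symmetry; apply is_derive_unique, solenoidal_extension_dz).
  unfold G. change (ex3 (slice u t) x y z) with (dx u x y z t).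
  change (ey3 (slice v t) x y z) with (dy v x y z t). ring.
Qed.

Lemma solenoidal_extension_partials x y z : -1 <= z <= 1 ->
  ex3 solenoidal_extension x y z = dx w x y z t /\ ey3 solenoidal_extension x y z = dy w x y z t
  /\ ez3 solenoidal_extension x y z = dz w x y z t.
Proof.
  intros Hz. split; [|split].
  - apply Derive_ext; intros s. now apply solenoidal_extension_on_layer.
  - apply Derive_ext; intros s. now apply solenoidal_extension_on_layer.
  - replace (ez3 solenoidal_extension x y z) with (- G x y z t)
      by (symmetry; apply is_derive_unique, solenoidal_extension_dz).
    unfold G. pose proof (Hdiv x y z Hz). lra.
Qed.

Lemma gradsq_solenoidal_extension : gradsq a b solenoidal_extension = gradsq a b (slice w t).
Proof. apply gradsq_ext; intros; now apply solenoidal_extension_partials. Qed.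

End SolenoidalExtension.

(** * The basic flows *)

Lemma sinh_pos x : 0 < x -> 0 < sinh x.
Proof.
  intros Hx. unfold sinh. pose proof (exp_increasing (- x) x ltac:(lra)). lra.
Qed.

Lemma cosh_gt_1 x : 0 < x -> 1 < cosh x.
Proof.
  intros Hx. unfold cosh.
  pose proof (exp_ineq1 x ltac:(lra)). pose proof (exp_ineq1_le (- x)). lra.
Qed.

Lemma basic_flow_twice_differentiable fl Ha : 0 < Ha ->
  exists U' B' : R -> R,
    forall z, is_derive (Ubase fl Ha) z (U' z) /\ is_derive (Bbase fl Ha) z (B' z)
              /\ ex_derive U' z /\ ex_derive B' z.
Proof.
  intros HHa. pose proof (sinh_pos Ha HHa) as Hs. pose proof (cosh_gt_1 Ha HHa) as Hc.
  destruct fl.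
  - exists (fun z => Ha * cosh (Ha * z) / sinh Ha), (fun z => - sinh (Ha * z) / sinh Ha).
    intros z. unfold Ubase, Bbase, sinh, cosh in *.
    split; [|split; [|split]]; auto_derive; repeat split; try field; lra.
  - exists (fun z => - (Ha * sinh (Ha * z)) / (cosh Ha - 1)),
      (fun z => (Ha * cosh (Ha * z) - sinh Ha) / (Ha * (cosh Ha - 1))).
    intros z. unfold Ubase, Bbase, sinh, cosh in *.
    split; [|split; [|split]]; auto_derive; repeat split; try field; lra.
Qed.

Lemma basic_flow_regular fl Ha : 0 < Ha ->
  (forall z, ex_derive (Ubase fl Ha) z) /\ (forall z, continuous (dU fl Ha) z) /\
  (forall z, ex_derive (Bbase fl Ha) z) /\ (forall z, continuous (dB fl Ha) z).
Proof.
  intros HHa. destruct (basic_flow_twice_differentiable fl Ha HHa) as [U' [B' H]].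
  split; [|split; [|split]]; intros z.
  - exact (ex_intro _ _ (proj1 (H z))).
  - apply (continuous_ext U'); [intros s; symmetry; exact (is_derive_unique _ _ _ (proj1 (H s)))|].
    exact (ex_derive_continuous (K := R_AbsRing) (V := R_NormedModule) _ _
             (proj1 (proj2 (proj2 (H z))))).
  - exact (ex_intro _ _ (proj1 (proj2 (H z)))).
  - apply (continuous_ext B');
      [intros s; symmetry; exact (is_derive_unique _ _ _ (proj1 (proj2 (H s))))|].
    exact (ex_derive_continuous (K := R_AbsRing) (V := R_NormedModule) _ _
             (proj2 (proj2 (proj2 (H z))))).
Qed.

(** * Energy balance of a perturbation *)

(* With A / Rm = Ha^2 / Re, viscous and Ohmic losses together are [dissipation / Re]. *)
Definition dissipation (a b Ha : R) (u v w h k l : field4) t :=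
  gradsq a b (slice u t) + gradsq a b (slice v t) + gradsq a b (slice w t)
  + Ha ^ 2 * (gradsq a b (slice h t) + gradsq a b (slice k t) + gradsq a b (slice l t)).

Lemma energy_int_Omega_squares a b A u v w h k l t :
  energy a b A u v w h k l t
  = / 2 * (int_Omega a b (fun x y z t => u x y z t ^ 2 + v x y z t ^ 2 + w x y z t ^ 2) t
           + A * int_Omega a b (fun x y z t => h x y z t ^ 2 + k x y z t ^ 2 + l x y z t ^ 2) t).
Proof. reflexivity. Qed.

Lemma energy_int_Omega a b A u v w h k l t :
  energy a b A u v w h k l t
  = / 2 * (int_Omega a b (dot3 u v w u v w) t + A * int_Omega a b (dot3 h k l h k l) t).
Proof.
  rewrite energy_int_Omega_squares.
  rewrite (int_Omega_ext a b (fun x y z t => u x y z t ^ 2 + v x y z t ^ 2 + w x y z t ^ 2)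
      (dot3 u v w u v w)),
    (int_Omega_ext a b (fun x y z t => h x y z t ^ 2 + k x y z t ^ 2 + l x y z t ^ 2)
      (dot3 h k l h k l)) by (intros; unfold dot3; ring).
  reflexivity.
Qed.

Lemma eq_of_lincomb6 (c1 c2 c3 c4 c5 c6 L R l1 r1 l2 r2 l3 r3 l4 r4 l5 r5 l6 r6 : R) :
  l1 = r1 -> l2 = r2 -> l3 = r3 -> l4 = r4 -> l5 = r5 -> l6 = r6 ->
  L - R = c1 * (l1 - r1) + c2 * (l2 - r2) + c3 * (l3 - r3)
          + c4 * (l4 - r4) + c5 * (l5 - r5) + c6 * (l6 - r6) ->
  L = R.
Proof. intros -> -> -> -> -> -> H. lra. Qed.

Lemma energy_dissipation_arith (Iu Iv Iw Ih Ik Il Gu Gv Gw Gh Gk Gl c Pm : R) :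
  0 < Pm -> 0 < c ->
  0 <= Iu <= 4 * Gu -> 0 <= Iv <= 4 * Gv -> 0 <= Iw <= 4 * Gw ->
  0 <= Ih <= 4 * Gh -> 0 <= Ik <= 4 * Gk -> 0 <= Il <= 4 * Gl ->
  0 <= / 2 * (Iu + Iv + Iw + c * Pm * (Ih + Ik + Il))
  <= 2 * (1 + Pm) * (Gu + Gv + Gw + c * (Gh + Gk + Gl)).
Proof.
  intros. assert (0 < c * Pm) by (apply Rmult_lt_0_compat; lra).
  assert (c * Pm * (Ih + Ik + Il) <= c * Pm * (4 * (Gh + Gk + Gl)))
    by (apply Rmult_le_compat_l; lra).
  assert (0 <= c * Pm * (Ih + Ik + Il)) by (apply Rmult_le_pos; lra).
  assert (0 <= Pm * (Gu + Gv + Gw)) by (apply Rmult_le_pos; lra).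
  assert (0 <= c * (Gh + Gk + Gl)) by (apply Rmult_le_pos; lra).
  split; lra.
Qed.

Lemma decay_rate_arith (I D1 D E m Re c : R) : 0 < m -> 0 < Re -> Re < / m -> 0 < c ->
  0 <= E <= c * D -> I <= m * D1 -> D1 <= D ->
  I - D / Re <= m ^ 2 / c * (Re - / m) * E.
Proof.
  intros Hm HRe HReM Hc [HE0 HE] HI HD.
  assert (HmRe : m * Re < 1)
    by (apply (Rmult_lt_compat_l m) in HReM; [rewrite Rinv_r in HReM; lra | exact Hm]).
  assert (Hneg : m - / Re < 0).
  { assert (m < / Re) by (apply (Rmult_lt_reg_r Re); [lra | rewrite Rinv_l; lra]). lra. }
  assert (Hcmp : m - / Re <= m ^ 2 * (Re - / m)).
  { assert (m ^ 2 * (Re - / m) - (m - / Re) = (m * Re - 1) ^ 2 / Re) by (field; lra).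
    assert (0 <= (m * Re - 1) ^ 2 / Re) by (apply Rdiv_le_0_compat; [apply pow2_ge_0 | lra]).
    lra. }
  assert (E / c <= D) by (apply (Rmult_le_reg_l c); [lra | unfold Rdiv; field_simplify; lra]).
  apply Rle_trans with ((m - / Re) * D).
  { unfold Rdiv. assert (m * D1 <= m * D) by (apply Rmult_le_compat_l; lra). nra. }
  apply Rle_trans with ((m - / Re) * (E / c)); [apply Rmult_le_compat_neg_l; lra|].
  replace (m ^ 2 / c * (Re - / m) * E) with (m ^ 2 * (Re - / m) * (E / c)) by (field; lra).
  apply Rmult_le_compat_r; [apply Rdiv_le_0_compat|]; lra.
Qed.

Section Perturbation.

Variables (fl : basic_flow) (a b Ha Pm Re : R) (u v w h k l p : field4).
Hypotheses (Ha0 : 0 < a) (Hb0 : 0 < b) (HHa : 0 < Ha) (HPm : 0 < Pm) (HRe : 0 < Re).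
Hypothesis Hpert : is_perturbation fl a b Ha Pm Re u v w h k l p.

Let C2u : C2_4 u := proj1 (proj1 Hpert).
Let C2v : C2_4 v := proj1 (proj2 (proj1 Hpert)).
Let C2w : C2_4 w := proj1 (proj2 (proj2 (proj1 Hpert))).
Let C2h : C2_4 h := proj1 (proj2 (proj2 (proj2 (proj1 Hpert)))).
Let C2k : C2_4 k := proj1 (proj2 (proj2 (proj2 (proj2 (proj1 Hpert))))).
Let C2l : C2_4 l := proj1 (proj2 (proj2 (proj2 (proj2 (proj2 (proj1 Hpert)))))).
Let Cp : C1_4 p := proj1 (proj2 (proj2 (proj2 (proj2 (proj2 (proj2 (proj1 Hpert))))))).
Let Cu : C1_4 u := proj1 C2u.
Let Cv : C1_4 v := proj1 C2v.
Let Cw : C1_4 w := proj1 C2w.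
Let Ch : C1_4 h := proj1 C2h.
Let Ck : C1_4 k := proj1 C2k.
Let Cl : C1_4 l := proj1 C2l.

Let Pu : periodic4 a b u := proj1 (proj1 (proj2 Hpert)).
Let Pv : periodic4 a b v := proj1 (proj2 (proj1 (proj2 Hpert))).
Let Pw : periodic4 a b w := proj1 (proj2 (proj2 (proj1 (proj2 Hpert)))).
Let Ph : periodic4 a b h := proj1 (proj2 (proj2 (proj2 (proj1 (proj2 Hpert))))).
Let Pk : periodic4 a b k := proj1 (proj2 (proj2 (proj2 (proj2 (proj1 (proj2 Hpert)))))).
Let Pl : periodic4 a b l := proj1 (proj2 (proj2 (proj2 (proj2 (proj2 (proj1 (proj2 Hpert))))))).
Let Pp : periodic4 a b p := proj2 (proj2 (proj2 (proj2 (proj2 (proj2 (proj1 (proj2 Hpert))))))).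

Lemma perturbation_walls t : 0 <= t ->
  walls u t /\ walls v t /\ walls w t /\ walls h t /\ walls k t /\ walls l t.
Proof.
  intros Ht. pose proof (proj1 (proj2 (proj2 Hpert))) as Hwall.
  split; [|split; [|split; [|split; [|split]]]]; intros x y;
    destruct (Hwall x y t Ht 1 (or_introl eq_refl)) as (? & ? & ? & ? & ? & ?);
    destruct (Hwall x y t Ht (-1) (or_intror eq_refl)) as (? & ? & ? & ? & ? & ?);
    split; assumption.
Qed.

Lemma perturbation_solenoidal x y z t : -1 <= z <= 1 -> 0 <= t ->
  dx u x y z t + dy v x y z t + dz w x y z t = 0 /\ dx h x y z t + dy k x y z t + dz l x y z t = 0.
Proof.
  intros Hz Ht.
  destruct (proj2 (proj2 (proj2 Hpert)) x y z t Hz Ht) as (_ & _ & _ & _ & _ & _ & D).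
  exact D.
Qed.

Definition I_density : field4 := fun x y z t =>
  - (dU fl Ha z * w x y z t * u x y z t)
  + Ha ^ 2 * Pm * (l x y z t * dB fl Ha z * u x y z t - w x y z t * dB fl Ha z * h x y z t
                   + l x y z t * dU fl Ha z * h x y z t).

(* Components of the total velocity (U + u, v, w) and of the total field
   (B + h, k, 1/Rm + l), along which the perturbation equations advect (u, v, w) and
   (h, k, l). *)
Definition full_vel_x : field4 := fun x y z t => Ubase fl Ha z + u x y z t.
Definition full_mag_x : field4 := fun x y z t => Bbase fl Ha z + h x y z t.
Definition full_mag_z : field4 := fun x y z t => / (Pm * Re) + l x y z t.

Definition energy_rate_density : field4 := fun x y z t =>
  I_density x y z t
  + - / 2 * advect full_vel_x v w (dot3 u v w u v w) x y z t
  + - (Ha ^ 2 * Pm / 2) * advect full_vel_x v w (dot3 h k l h k l) x y z t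
  + Ha ^ 2 * Pm * advect full_mag_x k full_mag_z (dot3 u v w h k l) x y z t
  + -1 * advect u v w p x y z t
  + / Re * dot3 u v w (lap u) (lap v) (lap w) x y z t
  + Ha ^ 2 * Pm / (Pm * Re) * dot3 h k l (lap h) (lap k) (lap l) x y z t.

Lemma energy_density_identity x y z t : -1 <= z <= 1 -> 0 <= t ->
  dot3 u v w (dt u) (dt v) (dt w) x y z t + Ha ^ 2 * Pm * dot3 h k l (dt h) (dt k) (dt l) x y z t
  = energy_rate_density x y z t.
Proof.
  intros Hz Ht.
  destruct (proj2 (proj2 (proj2 Hpert)) x y z t Hz Ht) as (E1 & E2 & E3 & E4 & E5 & E6 & _).
  unfold energy_rate_density.
  rewrite (advect_dot3 u v w u v w), (advect_dot3 h k l h k l), (advect_dot3 u v w h k l)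
    by assumption.
  apply (eq_of_lincomb6 (u x y z t) (v x y z t) (w x y z t) (Ha ^ 2 * Pm * h x y z t)
    (Ha ^ 2 * Pm * k x y z t) (Ha ^ 2 * Pm * l x y z t) _ _ _ _ _ _ _ _ _ _ _ _ _ _
    E1 E2 E3 E4 E5 E6).
  unfold I_density, full_vel_x, full_mag_x, full_mag_z, dot3, advect, lap. field. lra.
Qed.

Lemma C1_4_full_vel_x : C1_4 full_vel_x.
Proof.
  destruct (basic_flow_regular fl Ha HHa) as (HU & HdU & _).
  exact (C1_4_plus _ _ (C1_4_zfun (Ubase fl Ha) HU HdU) Cu).
Qed.

Lemma C1_4_full_mag_x : C1_4 full_mag_x.
Proof.
  destruct (basic_flow_regular fl Ha HHa) as (_ & _ & HB & HdB).
  exact (C1_4_plus _ _ (C1_4_zfun (Bbase fl Ha) HB HdB) Ch).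
Qed.

Lemma C1_4_full_mag_z : C1_4 full_mag_z.
Proof. exact (C1_4_plus _ _ (C1_4_const _) Cl). Qed.

Lemma periodic4_full_vel_x : periodic4 a b full_vel_x.
Proof. exact (periodic4_plus _ _ _ _ (periodic4_zfun _ _ _) Pu). Qed.

Lemma periodic4_full_mag_x : periodic4 a b full_mag_x.
Proof. exact (periodic4_plus _ _ _ _ (periodic4_zfun _ _ _) Ph). Qed.

Lemma dx_full_vel_x x y z t : dx full_vel_x x y z t = dx u x y z t.
Proof.
  unfold full_vel_x, dx. rewrite Derive_plus, Derive_const; [ring | apply ex_derive_const |].
  exact (C1_4_ex_dx u Cu x y z t).
Qed.

Lemma dx_full_mag_x x y z t : dx full_mag_x x y z t = dx h x y z t.
Proof.
  unfold full_mag_x, dx. rewrite Derive_plus, Derive_const; [ring | apply ex_derive_const |].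
  exact (C1_4_ex_dx h Ch x y z t).
Qed.

Lemma dz_full_mag_z x y z t : dz full_mag_z x y z t = dz l x y z t.
Proof.
  unfold full_mag_z, dz. rewrite Derive_plus, Derive_const; [ring | apply ex_derive_const |].
  exact (C1_4_ex_dz l Cl x y z t).
Qed.

Section Transport.

Variable t : R.
Hypothesis Ht : 0 <= t.

Lemma int_Omega_transport_kinetic :
  int_Omega a b (advect full_vel_x v w (dot3 u v w u v w)) t = 0.
Proof.
  destruct (perturbation_walls t Ht) as (_ & _ & Ww & _).
  apply int_Omega_advect; [exact Hb0 | exact C1_4_full_vel_x | exact Cv | exact Cw
    | exact (C1_4_dot3 u v w u v w Cu Cv Cw Cu Cv Cw) | exact periodic4_full_vel_x | exact Pv
    | exact (periodic4_dot3 a b u v w u v w Pu Pv Pw Pu Pv Pw) | |].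
  - intros x y z Hz. rewrite dx_full_vel_x. exact (proj1 (perturbation_solenoidal x y z t Hz Ht)).
  - intros x y. unfold dot3. destruct (Ww x y) as [-> ->]. split; ring.
Qed.

Lemma int_Omega_transport_magnetic :
  int_Omega a b (advect full_vel_x v w (dot3 h k l h k l)) t = 0.
Proof.
  destruct (perturbation_walls t Ht) as (_ & _ & Ww & _).
  apply int_Omega_advect; [exact Hb0 | exact C1_4_full_vel_x | exact Cv | exact Cw
    | exact (C1_4_dot3 h k l h k l Ch Ck Cl Ch Ck Cl) | exact periodic4_full_vel_x | exact Pv
    | exact (periodic4_dot3 a b h k l h k l Ph Pk Pl Ph Pk Pl) | |].
  - intros x y z Hz. rewrite dx_full_vel_x. exact (proj1 (perturbation_solenoidal x y z t Hz Ht)).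
  - intros x y. unfold dot3. destruct (Ww x y) as [-> ->]. split; ring.
Qed.

Lemma int_Omega_transport_cross :
  int_Omega a b (advect full_mag_x k full_mag_z (dot3 u v w h k l)) t = 0.
Proof.
  destruct (perturbation_walls t Ht) as (Wu & Wv & Ww & _).
  apply int_Omega_advect; [exact Hb0 | exact C1_4_full_mag_x | exact Ck | exact C1_4_full_mag_z
    | exact (C1_4_dot3 u v w h k l Cu Cv Cw Ch Ck Cl) | exact periodic4_full_mag_x | exact Pk
    | exact (periodic4_dot3 a b u v w h k l Pu Pv Pw Ph Pk Pl) | |].
  - intros x y z Hz. rewrite dx_full_mag_x, dz_full_mag_z.
    exact (proj2 (perturbation_solenoidal x y z t Hz Ht)).
  - intros x y. unfold dot3.
    destruct (Wu x y) as [-> ->], (Wv x y) as [-> ->], (Ww x y) as [-> ->]. split; ring.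
Qed.

Lemma int_Omega_transport_pressure : int_Omega a b (advect u v w p) t = 0.
Proof.
  destruct (perturbation_walls t Ht) as (_ & _ & Ww & _).
  apply int_Omega_advect;
    [exact Hb0 | exact Cu | exact Cv | exact Cw | exact Cp | exact Pu | exact Pv | exact Pp | |].
  - intros x y z Hz. exact (proj1 (perturbation_solenoidal x y z t Hz Ht)).
  - intros x y. destruct (Ww x y) as [-> ->]. split; ring.
Qed.

End Transport.

Lemma int_Omega_I_density t : int_Omega a b I_density t
  = Ifun fl a b Ha Pm (slice u t) (slice v t) (slice w t) (slice h t) (slice k t) (slice l t).
Proof.
  destruct (basic_flow_regular fl Ha HHa) as (_ & HdU & _ & HdB).
  pose proof (C1_4_cont u Cu). pose proof (C1_4_cont w Cw).
  pose proof (C1_4_cont h Ch). pose proof (C1_4_cont l Cl).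
  unfold I_density.
  rewrite int_Omega_plus, int_Omega_opp, int_Omega_scal, int_Omega_plus, int_Omega_minus
    by (exact Hb0 || solve_cont4).
  reflexivity.
Qed.

Lemma int_Omega_energy_rate t : 0 <= t ->
  int_Omega a b (fun x y z t => dot3 u v w (dt u) (dt v) (dt w) x y z t
                                + Ha ^ 2 * Pm * dot3 h k l (dt h) (dt k) (dt l) x y z t) t
  = Ifun fl a b Ha Pm (slice u t) (slice v t) (slice w t) (slice h t) (slice k t) (slice l t)
    - dissipation a b Ha u v w h k l t / Re.
Proof.
  intros Ht.
  destruct (basic_flow_regular fl Ha HHa) as (_ & HdU & _ & HdB).
  destruct (perturbation_walls t Ht) as (Wu & Wv & Ww & Wh & Wk & Wl).
  pose proof (C1_4_cont u Cu). pose proof (C1_4_cont v Cv). pose proof (C1_4_cont w Cw).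
  pose proof (C1_4_cont h Ch). pose proof (C1_4_cont k Ck). pose proof (C1_4_cont l Cl).
  pose proof (C1_4_cont _ C1_4_full_vel_x). pose proof (C1_4_cont _ C1_4_full_mag_x).
  pose proof (C1_4_cont _ C1_4_full_mag_z).
  pose proof Cu. pose proof Cv. pose proof Cw. pose proof Ch. pose proof Ck. pose proof Cl.
  pose proof Cp.
  pose proof (cont4_lap u C2u). pose proof (cont4_lap v C2v). pose proof (cont4_lap w C2w).
  pose proof (cont4_lap h C2h). pose proof (cont4_lap k C2k). pose proof (cont4_lap l C2l).
  assert (cont4 I_density) by (unfold I_density; solve_cont4).
  rewrite (int_Omega_ext a b _ energy_rate_density t)
    by (intros x y z Hz; apply energy_density_identity; lra).
  unfold energy_rate_density.
  rewrite !int_Omega_plus, !int_Omega_scal by (exact Hb0 || solve_cont4).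
  rewrite int_Omega_I_density, int_Omega_transport_kinetic, int_Omega_transport_magnetic,
    int_Omega_transport_cross, int_Omega_transport_pressure by exact Ht.
  rewrite (int_Omega_dot3_lap a b u v w t Hb0 C2u C2v C2w Pu Pv Pw Wu Wv Ww),
    (int_Omega_dot3_lap a b h k l t Hb0 C2h C2k C2l Ph Pk Pl Wh Wk Wl).
  unfold dissipation. field. lra.
Qed.

Lemma int_Omega_dt_dot3 f1 f2 f3 t : C1_4 f1 -> C1_4 f2 -> C1_4 f3 ->
  int_Omega a b (dt (dot3 f1 f2 f3 f1 f2 f3)) t
  = 2 * int_Omega a b (dot3 f1 f2 f3 (dt f1) (dt f2) (dt f3)) t.
Proof.
  intros H1 H2 H3.
  pose proof (C1_4_cont f1 H1). pose proof (C1_4_cont f2 H2). pose proof (C1_4_cont f3 H3).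
  pose proof (C1_4_cont_dt f1 H1). pose proof (C1_4_cont_dt f2 H2). pose proof (C1_4_cont_dt f3 H3).
  rewrite <- int_Omega_scal by (exact Hb0 || solve_cont4).
  apply int_Omega_ext. intros x y z _. rewrite dt_dot3 by assumption. unfold dot3. ring.
Qed.

Lemma is_derive_energy t : 0 <= t ->
  is_derive (energy a b (Ha ^ 2 * Pm) u v w h k l) t
    (Ifun fl a b Ha Pm (slice u t) (slice v t) (slice w t) (slice h t) (slice k t) (slice l t)
     - dissipation a b Ha u v w h k l t / Re).
Proof.
  intros Ht. rewrite <- int_Omega_energy_rate by exact Ht.
  apply (is_derive_ext (fun s => / 2 * (int_Omega a b (dot3 u v w u v w) s
                                        + Ha ^ 2 * Pm * int_Omega a b (dot3 h k l h k l) s))).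
  { intros s. symmetry. apply energy_int_Omega. }
  replace (int_Omega a b _ t)
    with (/ 2 * (int_Omega a b (dt (dot3 u v w u v w)) t
                 + Ha ^ 2 * Pm * int_Omega a b (dt (dot3 h k l h k l)) t)).
  - apply is_derive_scal, (is_derive_plus (K := R_AbsRing) (V := R_NormedModule));
      [|apply is_derive_scal]; apply is_derive_int_Omega_t; try exact Hb0.
    + exact (C1_4_dot3 u v w u v w Cu Cv Cw Cu Cv Cw).
    + exact (C1_4_dot3 h k l h k l Ch Ck Cl Ch Ck Cl).
  - pose proof (C1_4_cont u Cu). pose proof (C1_4_cont v Cv). pose proof (C1_4_cont w Cw).
    pose proof (C1_4_cont h Ch). pose proof (C1_4_cont k Ck). pose proof (C1_4_cont l Cl).
    pose proof (C1_4_cont_dt u Cu). pose proof (C1_4_cont_dt v Cv). pose proof (C1_4_cont_dt w Cw).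
    pose proof (C1_4_cont_dt h Ch). pose proof (C1_4_cont_dt k Ck). pose proof (C1_4_cont_dt l Cl).
    rewrite (int_Omega_dt_dot3 u v w), (int_Omega_dt_dot3 h k l) by assumption.
    rewrite int_Omega_plus, int_Omega_scal by (exact Hb0 || solve_cont4).
    field.
Qed.

(* For D1 = 0 the quotient I / D1 is [I / 0 = 0] and says nothing about I. *)
Lemma Ifun_eq0_of_D1fun_eq0 t : 0 <= t ->
  D1fun a b Ha (slice u t) (slice v t) (slice w t) (slice h t) (slice k t) (slice l t) = 0 ->
  Ifun fl a b Ha Pm (slice u t) (slice v t) (slice w t) (slice h t) (slice k t) (slice l t) = 0.
Proof.
  intros Ht HD.
  destruct (basic_flow_regular fl Ha HHa) as (_ & HdU & _ & HdB).
  destruct (perturbation_walls t Ht) as (Wu & _ & Ww & Wh & _ & Wl).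
  pose proof (gradsq_nonneg a b Ha0 Hb0 u t Cu). pose proof (gradsq_nonneg a b Ha0 Hb0 w t Cw).
  pose proof (gradsq_nonneg a b Ha0 Hb0 h t Ch). pose proof (gradsq_nonneg a b Ha0 Hb0 l t Cl).
  unfold D1fun in HD. assert (HHa2 : 0 < Ha ^ 2) by (apply pow_lt; lra).
  pose proof (int_Omega_sq_eq0 a b Ha0 Hb0 u t Cu Wu ltac:(nra)).
  pose proof (int_Omega_sq_eq0 a b Ha0 Hb0 w t Cw Ww ltac:(nra)).
  pose proof (int_Omega_sq_eq0 a b Ha0 Hb0 h t Ch Wh ltac:(nra)).
  pose proof (int_Omega_sq_eq0 a b Ha0 Hb0 l t Cl Wl ltac:(nra)).
  pose proof (C1_4_cont u Cu). pose proof (C1_4_cont w Cw).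
  pose proof (C1_4_cont h Ch). pose proof (C1_4_cont l Cl).
  unfold Ifun. cbv zeta.
  change (int3 a b (fun x y z => dU fl Ha z * slice w t x y z * slice u t x y z))
    with (int_Omega a b (fun x y z t => dU fl Ha z * w x y z t * u x y z t) t).
  change (int3 a b (fun x y z => slice l t x y z * dB fl Ha z * slice u t x y z))
    with (int_Omega a b (fun x y z t => l x y z t * dB fl Ha z * u x y z t) t).
  change (int3 a b (fun x y z => slice w t x y z * dB fl Ha z * slice h t x y z))
    with (int_Omega a b (fun x y z t => w x y z t * dB fl Ha z * h x y z t) t).
  change (int3 a b (fun x y z => slice l t x y z * dU fl Ha z * slice h t x y z))
    with (int_Omega a b (fun x y z t => l x y z t * dU fl Ha z * h x y z t) t).
  rewrite (int_Omega_weighted_product_eq0 a b (dU fl Ha) w u),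
    (int_Omega_ext a b _ (fun x y z t => dB fl Ha z * l x y z t * u x y z t)),
    (int_Omega_weighted_product_eq0 a b (dB fl Ha) l u),
    (int_Omega_ext a b _ (fun x y z t => dB fl Ha z * w x y z t * h x y z t)),
    (int_Omega_weighted_product_eq0 a b (dB fl Ha) w h),
    (int_Omega_ext a b _ (fun x y z t => dU fl Ha z * l x y z t * h x y z t)),
    (int_Omega_weighted_product_eq0 a b (dU fl Ha) l h);
    try assumption; intros; ring.
Qed.

Lemma extended_slices_in_S t : 0 <= t ->
  0 < D1fun a b Ha (slice u t) (slice v t) (slice w t) (slice h t) (slice k t) (slice l t) ->
  in_S a b (slice u t) (slice v t) (solenoidal_extension u v w t)
           (slice h t) (slice k t) (solenoidal_extension h k l t).
Proof.
  intros Ht Hpos.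
  destruct (perturbation_walls t Ht) as (Wu & Wv & Ww & Wh & Wk & Wl).
  assert (Du : forall x y z, -1 <= z <= 1 -> dx u x y z t + dy v x y z t + dz w x y z t = 0)
    by (intros; now apply perturbation_solenoidal).
  assert (Dh : forall x y z, -1 <= z <= 1 -> dx h x y z t + dy k x y z t + dz l x y z t = 0)
    by (intros; now apply perturbation_solenoidal).
  split; [now apply admissible3_slice|]. split; [now apply admissible3_slice|].
  split; [now apply solenoidal_extension_admissible|].
  split; [now apply admissible3_slice|]. split; [now apply admissible3_slice|].
  split; [now apply solenoidal_extension_admissible|].
  split; [intros; now apply solenoidal_extension_div|].
  split; [intros; now apply solenoidal_extension_div|].
  rewrite !gradsq_solenoidal_extension by assumption.
  apply sqrt_sum_pos with (Ha ^ 2); try apply gradsq_nonneg; try assumption.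
  apply pow_lt; lra.
Qed.

Lemma Ifun_le_D1fun m t : 0 <= t -> is_sup_ratio fl a b Ha Pm m ->
  Ifun fl a b Ha Pm (slice u t) (slice v t) (slice w t) (slice h t) (slice k t) (slice l t)
  <= m * D1fun a b Ha (slice u t) (slice v t) (slice w t) (slice h t) (slice k t) (slice l t).
Proof.
  intros Ht [Hsup _].
  destruct (perturbation_walls t Ht) as (Wu & Wv & Ww & Wh & Wk & Wl).
  assert (Du : forall x y z, -1 <= z <= 1 -> dx u x y z t + dy v x y z t + dz w x y z t = 0)
    by (intros; now apply perturbation_solenoidal).
  assert (Dh : forall x y z, -1 <= z <= 1 -> dx h x y z t + dy k x y z t + dz l x y z t = 0)
    by (intros; now apply perturbation_solenoidal).
  set (D := D1fun a b Ha (slice u t) (slice v t) (slice w t) (slice h t) (slice k t) (slice l t)).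
  assert (HD : 0 <= D).
  { unfold D, D1fun. pose proof (pow2_ge_0 Ha).
    pose proof (gradsq_nonneg a b Ha0 Hb0 h t Ch). pose proof (gradsq_nonneg a b Ha0 Hb0 l t Cl).
    pose proof (gradsq_nonneg a b Ha0 Hb0 u t Cu). pose proof (gradsq_nonneg a b Ha0 Hb0 w t Cw).
    assert (0 <= Ha ^ 2 * (gradsq a b (slice h t) + gradsq a b (slice l t)))
      by (apply Rmult_le_pos; lra).
    lra. }
  destruct (Rle_lt_or_eq_dec _ _ HD) as [Hpos | Hzero].
  2: { rewrite Ifun_eq0_of_D1fun_eq0, <- Hzero, Rmult_0_r by auto. apply Rle_refl. }
  pose proof (Hsup _ _ _ _ _ _ (extended_slices_in_S t Ht Hpos)) as Hratio.
  rewrite (Ifun_ext fl a b Ha Pm _ _ _ _ _ _ (slice w t) (slice l t)) in Hratio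
    by (intros; unfold slice; split; now apply solenoidal_extension_on_layer).
  replace (D1fun a b Ha _ _ (solenoidal_extension u v w t) _ _ (solenoidal_extension h k l t))
    with D in Hratio by (unfold D, D1fun; now rewrite !gradsq_solenoidal_extension).
  apply (Rmult_le_compat_r D) in Hratio; [|lra].
  unfold Rdiv in Hratio. rewrite Rmult_assoc, Rinv_l in Hratio by lra. lra.
Qed.

Lemma energy_nonneg_le_dissipation t : 0 <= t ->
  0 <= energy a b (Ha ^ 2 * Pm) u v w h k l t
  <= 2 * (1 + Pm) * dissipation a b Ha u v w h k l t.
Proof.
  intros Ht.
  destruct (perturbation_walls t Ht) as (Wu & Wv & Ww & Wh & Wk & Wl).
  assert (Hsq : forall f, C1_4 f -> walls f t ->
    0 <= int_Omega a b (fun x y z t => f x y z t ^ 2) t <= 4 * gradsq a b (slice f t)).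
  { intros f Hf Wf. pose proof (C1_4_cont f Hf). split.
    - apply int_Omega_nonneg; [exact Ha0 | exact Hb0 | solve_cont4 | intros; apply pow2_ge_0].
    - exact (int_Omega_poincare a b Ha0 Hb0 f t Hf Wf). }
  pose proof (C1_4_cont u Cu). pose proof (C1_4_cont v Cv). pose proof (C1_4_cont w Cw).
  pose proof (C1_4_cont h Ch). pose proof (C1_4_cont k Ck). pose proof (C1_4_cont l Cl).
  rewrite energy_int_Omega_squares, !int_Omega_plus by (exact Hb0 || solve_cont4).
  apply energy_dissipation_arith; [exact HPm | apply pow_lt; lra | ..]; now apply Hsq.
Qed.

Lemma energy_rate_le m t : 0 <= t -> 0 < m -> Re < / m -> is_sup_ratio fl a b Ha Pm m ->
  Ifun fl a b Ha Pm (slice u t) (slice v t) (slice w t) (slice h t) (slice k t) (slice l t)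
  - dissipation a b Ha u v w h k l t / Re
  <= m ^ 2 / (2 * (1 + Pm)) * (Re - / m) * energy a b (Ha ^ 2 * Pm) u v w h k l t.
Proof.
  intros Ht Hm HReM Hsup.
  apply decay_rate_arith
    with (D1fun a b Ha (slice u t) (slice v t) (slice w t) (slice h t) (slice k t) (slice l t));
    [exact Hm | exact HRe | exact HReM | lra | now apply energy_nonneg_le_dissipation
    | now apply Ifun_le_D1fun |].
  pose proof (gradsq_nonneg a b Ha0 Hb0 v t Cv). pose proof (gradsq_nonneg a b Ha0 Hb0 k t Ck).
  assert (0 <= Ha ^ 2 * gradsq a b (slice k t)) by (apply Rmult_le_pos; [apply pow2_ge_0 | lra]).
  unfold D1fun, dissipation. lra.
Qed.

End Perturbation.

(** * Exponential decay *)

Lemma gronwall (E dE : R -> R) lam t : 0 <= t ->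
  (forall s, 0 <= s -> is_derive E s (dE s)) -> (forall s, 0 <= s -> dE s <= lam * E s) ->
  E t <= E 0 * exp (lam * t).
Proof.
  intros Ht HE Hle.
  set (g s := E s * exp (- (lam * s))).
  assert (Hg : forall s, 0 <= s -> is_derive g s ((dE s - lam * E s) * exp (- (lam * s)))).
  { intros s Hs.
    replace ((dE s - lam * E s) * exp (- (lam * s)))
      with (plus (mult (dE s) (exp (- (lam * s)))) (mult (E s) (- lam * exp (- (lam * s)))))
      by (unfold plus, mult; simpl; ring).
    apply (is_derive_mult E (fun s => exp (- (lam * s))));
      [now apply HE | | intros; apply Rmult_comm].
    auto_derive; [exact I | ring]. }
  assert (Hdecr : g t <= g 0).
  { destruct (Req_dec t 0) as [-> | Ht0]; [lra|].
    destruct (MVT_gen g 0 t (fun s => (dE s - lam * E s) * exp (- (lam * s)))) as [c [Hc Heq]].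
    - intros s Hs. rewrite Rmin_left in Hs by lra. apply Hg. lra.
    - intros s Hs. rewrite Rmin_left, Rmax_right in Hs by lra. apply continuity_pt_filterlim.
      apply (ex_derive_continuous (K := R_AbsRing) (V := R_NormedModule)).
      eexists. apply Hg. lra.
    - rewrite Rmin_left, Rmax_right in Hc by lra.
      pose proof (Hle c ltac:(lra)). pose proof (exp_pos (- (lam * c))).
      assert ((dE c - lam * E c) * exp (- (lam * c)) * (t - 0) <= 0)
        by (apply Rmult_le_0_r; [apply Rmult_le_0_r; lra | lra]).
      lra. }
  unfold g in Hdecr. rewrite Rmult_0_r, Ropp_0, exp_0, Rmult_1_r in Hdecr.
  replace (E t) with (E t * exp (- (lam * t)) * exp (lam * t))
    by (rewrite Rmult_assoc, <- exp_plus; replace (- (lam * t) + lam * t) with 0 by ring;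
        rewrite exp_0; ring).
  apply Rmult_le_compat_r; [left; apply exp_pos | exact Hdecr].
Qed.

Theorem theorem3 :
  forall (fl : basic_flow) (a b Ha Pm m : R),
    0 < a -> 0 < b -> 0 < Ha -> 0 < Pm ->
    is_sup_ratio fl a b Ha Pm m ->
    exists c0 : R, 0 < c0 /\
      forall (Re : R), 0 < Re -> Re < / m ->
      forall (u v w h k l p : field4),
        is_perturbation fl a b Ha Pm Re u v w h k l p ->
        forall t : R, 0 <= t ->
          energy a b (Ha ^ 2 * Pm) u v w h k l t
            <= energy a b (Ha ^ 2 * Pm) u v w h k l 0
               * exp (PI ^ 2 / 2 * c0 * (Re - / m) * t).
Proof.
  intros fl a b Ha Pm m Ha0 Hb0 HHa HPm Hsup.
  pose proof PI_RGT_0 as HPI.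
  destruct (Rle_or_lt m 0) as [Hm | Hm].
  - exists 1. split; [lra|]. intros Re HRe HReM. exfalso.
    destruct (Req_dec m 0) as [-> | Hm0]; [rewrite Rinv_0 in HReM; lra|].
    pose proof (Rinv_lt_0_compat m ltac:(lra)). lra.
  - exists (m ^ 2 / ((1 + Pm) * PI ^ 2)). split.
    { apply Rdiv_lt_0_compat; [apply pow_lt; lra|].
      apply Rmult_lt_0_compat; [lra | apply pow_lt; lra]. }
    intros Re HRe HReM u v w h k l p Hpert t Ht.
    replace (PI ^ 2 / 2 * (m ^ 2 / ((1 + Pm) * PI ^ 2)) * (Re - / m) * t)
      with (m ^ 2 / (2 * (1 + Pm)) * (Re - / m) * t) by (field; lra).
    apply (gronwall _ (fun s => Ifun fl a b Ha Pm (slice u s) (slice v s) (slice w s)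
                                  (slice h s) (slice k s) (slice l s)
                                - dissipation a b Ha u v w h k l s / Re)); [exact Ht | |].
    + intros s Hs. now apply (is_derive_energy fl a b Ha Pm Re u v w h k l p).
    + intros s Hs. now apply (energy_rate_le fl a b Ha Pm Re u v w h k l p).
Qed.
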